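(* A developable Möbius band exists. Precisely: there exist real numbers $l>0$ and $b>0$ and a continuous injective map $\Phi$ from the Möbius strip $M_{l,b}$ into $\mathbb{R}^3$ with the following properties. The restriction of $\Phi$ to the interior of the rectangle $[0,l]\times[-b,b]$ is a piecewise smooth isometric immersion, so that it realizes the band purely by bending, without stretching. The image $\Phi(M_{l,b})$ is a one-sided (Möbius) surface made up of finitely many pieces of planes and pieces of circular cylinders, namely three planar pieces and three pieces of circular cylinders, and it is therefore developable.
   Context: For $l>0$ and $b>0$, the Möbius strip $M_{l,b}$ is the quotient of the rectangle $[0,l]\times[-b,b]$ by the identification $(0,t)\sim(l,-t)$ for $t\in[-b,b]$. This gluing joins the two short ends of the rectangle with a half-twist. A map of the rectangle into $\mathbb{R}^3$ is an isometric immersion, or a deformation ''without stretching'', if it preserves the lengths of all curves in the rectangle. A surface in $\mathbb{R}^3$ is developable if it is locally isometric to a plane, that is, its Gaussian curvature vanishes wherever it is smooth. Pieces of planes and of circular cylinders have this property. *)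

From Stdlib Require Import Reals List.
From Coquelicot Require Import Coquelicot.
Open Scope R_scope.

Definition R2 : Type := (R * R)%type.
Definition R3 : Type := (R * R * R)%type.

Definition dist2 (p q : R2) : R :=
  sqrt ((fst p - fst q) ^ 2 + (snd p - snd q) ^ 2).

Definition c1 (v : R3) : R := fst (fst v).
Definition c2 (v : R3) : R := snd (fst v).
Definition c3 (v : R3) : R := snd v.

Definition dot3 (v w : R3) : R := c1 v * c1 w + c2 v * c2 w + c3 v * c3 w.
Definition sub3 (v w : R3) : R3 := ((c1 v - c1 w, c2 v - c2 w), c3 v - c3 w).
Definition zero3 : R3 := ((0, 0), 0).
Definition dist3 (v w : R3) : R := sqrt (dot3 (sub3 v w) (sub3 v w)).

(* The plane { x | n . x = c } (with n <> 0 required where used). *)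
Definition plane (n : R3) (c : R) (x : R3) : Prop := dot3 n x = c.

(* The circular cylinder of radius r around the line through a with
   direction u (u <> 0, r > 0 required where used): points at distance r
   from the axis. *)
Definition cylinder (a u : R3) (r : R) (x : R3) : Prop :=
  let w := sub3 x a in
  dot3 w w - (dot3 w u) ^ 2 / dot3 u u = r ^ 2.

Definition same_set {A : Type} (S T : A -> Prop) : Prop :=
  forall x, S x <-> T x.

Definition rect (l b : R) (p : R2) : Prop :=
  0 <= fst p <= l /\ - b <= snd p <= b.

Definition open_rect (l b : R) (p : R2) : Prop :=
  0 < fst p < l /\ - b < snd p < b.

Definition mob_rel (l : R) (p q : R2) : Prop :=
  p = q
  \/ (fst p = 0 /\ fst q = l /\ snd q = - snd p)
  \/ (fst q = 0 /\ fst p = l /\ snd p = - snd q).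

Definition mobius_compatible (l b : R) (Phi : R2 -> R3) : Prop :=
  forall t, - b <= t <= b -> Phi (0, t) = Phi (l, - t).

Definition mobius_injective (l b : R) (Phi : R2 -> R3) : Prop :=
  forall p q, rect l b p -> rect l b q -> Phi p = Phi q -> mob_rel l p q.

(* Continuity of Phi on a set S (relative topology).  For S the rectangle
   this is continuity of the induced map on the quotient M_{l,b}. *)
Definition continuous_on_set (S : R2 -> Prop) (Phi : R2 -> R3) : Prop :=
  forall p, S p -> forall eps, 0 < eps -> exists delta, 0 < delta /\
    forall q, S q -> dist2 q p < delta -> dist3 (Phi q) (Phi p) < eps.

Definition interior2 (D : R2 -> Prop) (p : R2) : Prop :=
  exists r, 0 < r /\ forall q, dist2 q p < r -> D q.

Definition nonempty_interior (D : R2 -> Prop) : Prop :=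
  exists p, interior2 D p.

Definition in_closure_of_interior (D : R2 -> Prop) (p : R2) : Prop :=
  forall eps, 0 < eps -> exists q, interior2 D q /\ dist2 q p < eps.

Inductive pdir := PX | PY.

Definition pderiv (d : pdir) (f : R -> R -> R) : R -> R -> R :=
  match d with
  | PX => fun x y => Derive (fun t => f t y) x
  | PY => fun x y => Derive (fun t => f x t) y
  end.

Fixpoint ipderiv (ds : list pdir) (f : R -> R -> R) : R -> R -> R :=
  match ds with
  | nil => f
  | d :: ds' => pderiv d (ipderiv ds' f)
  end.

Definition continuous2_at (g : R -> R -> R) (x y : R) : Prop :=
  forall eps, 0 < eps -> exists delta, 0 < delta /\
    forall x' y', Rabs (x' - x) < delta -> Rabs (y' - y) < delta ->
      Rabs (g x' y' - g x y) < eps.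

Definition smooth_on (U : R2 -> Prop) (f : R -> R -> R) : Prop :=
  forall ds x y, U (x, y) ->
    ex_derive (fun t => ipderiv ds f t y) x /\
    ex_derive (fun t => ipderiv ds f x t) y /\
    continuous2_at (ipderiv ds f) x y.

Definition smooth_map_on (U : R2 -> Prop) (Phi : R2 -> R3) : Prop :=
  smooth_on U (fun x y => c1 (Phi (x, y))) /\
  smooth_on U (fun x y => c2 (Phi (x, y))) /\
  smooth_on U (fun x y => c3 (Phi (x, y))).

Definition piecewise_smooth_on (O : R2 -> Prop) (Phi : R2 -> R3) : Prop :=
  exists Ds : list (R2 -> Prop),
    (forall p, O p -> exists D, In D Ds /\ D p) /\
    (forall D, In D Ds ->
       (forall p, D p -> O p) /\
       (forall p, D p -> in_closure_of_interior D p) /\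
       smooth_map_on (interior2 D) Phi).

(* t0 < t1 < ... < tn = b, given a = t0 and the list [t1; ...; tn] *)
Fixpoint is_partition (a b : R) (ts : list R) : Prop :=
  match ts with
  | nil => a = b
  | t :: ts' => a < t /\ is_partition t b ts'
  end.

Fixpoint poly_len {A : Type} (d : A -> A -> R) (g : R -> A) (t0 : R)
    (ts : list R) : R :=
  match ts with
  | nil => 0
  | t :: ts' => d (g t0) (g t) + poly_len d g t ts'
  end.

Definition curve_length {A : Type} (d : A -> A -> R) (g : R -> A) (a b : R)
    : Rbar :=
  Lub_Rbar (fun s => exists ts, is_partition a b ts /\ s = poly_len d g a ts).

Definition continuous_curve_on (g : R -> R2) (a b : R) : Prop :=
  forall s, a <= s <= b -> forall eps, 0 < eps -> exists delta, 0 < delta /\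
    forall s', a <= s' <= b -> Rabs (s' - s) < delta -> dist2 (g s') (g s) < eps.

Definition length_preserving_on (O : R2 -> Prop) (Phi : R2 -> R3) : Prop :=
  forall (g : R -> R2) (a b : R), a <= b ->
    continuous_curve_on g a b ->
    (forall s, a <= s <= b -> O (g s)) ->
    curve_length dist3 (fun s => Phi (g s)) a b = curve_length dist2 g a b.

Definition three_planes_three_cylinders (l b : R) (Phi : R2 -> R3) : Prop :=
  exists (E : nat -> R2 -> Prop)
         (n : nat -> R3) (c : nat -> R)
         (a u : nat -> R3) (r : nat -> R),
    (forall p, rect l b p -> exists i, (i < 6)%nat /\ E i p) /\
    (forall i, (i < 6)%nat -> (forall p, E i p -> rect l b p) /\
                              nonempty_interior (E i)) /\
    (forall i j, (i < j < 6)%nat -> forall p, interior2 (E i) p ->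
                                     interior2 (E j) p -> False) /\
    (forall i, (i < 3)%nat ->
       n i <> zero3 /\ (forall p, E i p -> plane (n i) (c i) (Phi p))) /\
    (forall i, (i < 3)%nat ->
       u i <> zero3 /\ 0 < r i /\
       (forall p, E (3 + i)%nat p -> cylinder (a i) (u i) (r i) (Phi p))) /\
    (forall i j, (i < j < 3)%nat ->
       ~ same_set (plane (n i) (c i)) (plane (n j) (c j))) /\
    (forall i j, (i < j < 3)%nat ->
       ~ same_set (cylinder (a i) (u i) (r i)) (cylinder (a j) (u j) (r j))).

From Pilot Require Import Defs.
From Stdlib Require Import Reals Lra Psatz List Lia.
From Coquelicot Require Import Coquelicot.
Open Scope R_scope.
Set Bullet Behavior "Strict Subproofs".

(* The flat band [0, l] x [-1, 1] is folded three times, along two parallel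
   lines and an oblique line between them.  Each fold wraps a strip of the
   band half way around a cylinder and lays the rest back flat, turned over;
   the two end pieces land in the same plane, so the image consists of three
   planar and three cylindrical pieces.  The lines are placed so that the far
   end of the band lands on the near end with its width reversed, which is
   the Moebius identification.

   A fold maps each cross-section onto a unit-speed curve, so the
   differential of the map is orthogonal at every point; it is moreover
   Lipschitz, hence chords of length [d] are shortened by at most [O(d^2)],
   and summing over fine partitions shows that the lengths of curves are
   preserved. *)

Lemma PI_gt_3 : 3 < PI.
Proof. pose proof PI2_3_2. lra. Qed.

Lemma Rabs_sin_le x : Rabs (sin x) <= Rabs x.
Proof.
  pose proof (SIN_bound x). pose proof PI_gt_3.
  destruct (Rle_dec 1 (Rabs x)) as [Hbig|Hsmall].
  - unfold Rabs in *; repeat destruct Rcase_abs; lra.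
  - unfold Rabs in Hsmall. destruct (Rtotal_order x 0) as [Hx|[->|Hx]].
    + pose proof (sin_lt_x (- x) ltac:(lra)). rewrite sin_neg in *.
      assert (0 <= sin (- x)) by (apply sin_ge_0; destruct Rcase_abs; lra).
      rewrite sin_neg in *. unfold Rabs; repeat destruct Rcase_abs; lra.
    + rewrite sin_0, Rabs_R0. lra.
    + pose proof (sin_lt_x x Hx).
      assert (0 <= sin x) by (apply sin_ge_0; destruct Rcase_abs; lra).
      unfold Rabs; repeat destruct Rcase_abs; lra.
Qed.

Lemma cos_lipschitz a b : Rabs (cos a - cos b) <= Rabs (a - b).
Proof.
  rewrite form2, !Rabs_mult, (Rabs_left (-2)) by lra.
  pose proof (Rabs_sin_le ((a - b) / 2)). pose proof (SIN_bound ((a + b) / 2)).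
  assert (Rabs (sin ((a + b) / 2)) <= 1) by (unfold Rabs; destruct Rcase_abs; lra).
  assert (Rabs ((a - b) / 2) = Rabs (a - b) / 2) by (unfold Rabs; repeat destruct Rcase_abs; lra).
  pose proof (Rabs_pos (sin ((a - b) / 2))). pose proof (Rabs_pos (sin ((a + b) / 2))). nra.
Qed.

Lemma sin_lipschitz a b : Rabs (sin a - sin b) <= Rabs (a - b).
Proof.
  rewrite form4, !Rabs_mult, (Rabs_right 2) by lra.
  pose proof (Rabs_sin_le ((a - b) / 2)). pose proof (COS_bound ((a + b) / 2)).
  assert (Rabs (cos ((a + b) / 2)) <= 1) by (unfold Rabs; destruct Rcase_abs; lra).
  assert (Rabs ((a - b) / 2) = Rabs (a - b) / 2) by (unfold Rabs; repeat destruct Rcase_abs; lra).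
  pose proof (Rabs_pos (sin ((a - b) / 2))). pose proof (Rabs_pos (cos ((a + b) / 2))). nra.
Qed.

Lemma sin2_cos2_pow t : sin t ^ 2 + cos t ^ 2 = 1.
Proof. rewrite <- !Rsqr_pow2. apply sin2_cos2. Qed.

Lemma cos_open_range t : 0 < t < PI -> -1 < cos t < 1.
Proof.
  intros Ht. pose proof (COS_bound t). split.
  - destruct (Req_dec (cos t) (-1)) as [E|]; [|lra].
    rewrite <- cos_PI in E. apply cos_inj in E; lra.
  - destruct (Req_dec (cos t) 1) as [E|]; [|lra].
    rewrite <- cos_0 in E. apply cos_inj in E; lra.
Qed.

Lemma cos_div_inj r s s' : 0 < r -> 0 <= s <= PI * r -> 0 <= s' <= PI * r ->
  cos (s / r) = cos (s' / r) -> s = s'.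
Proof.
  intros Hr Hs Hs' E.
  assert (Hrange : forall u, 0 <= u <= PI * r -> 0 <= u / r <= PI).
  { intros u Hu. split; [apply Rmult_le_pos; [lra | apply Rlt_le, Rinv_0_lt_compat; lra]|].
    apply (Rmult_le_reg_r r); [lra|]. unfold Rdiv. rewrite Rmult_assoc, Rinv_l; lra. }
  apply cos_inj in E; try (apply Hrange; assumption).
  apply (Rmult_eq_reg_r (/ r)); [exact E | apply Rinv_neq_0_compat; lra].
Qed.

Lemma locally_of_ball (x e : R) (P : R -> Prop) :
  0 < e -> (forall y, Rabs (y - x) < e -> P y) -> locally x P.
Proof. intros He H. exists (mkposreal e He). exact H. Qed.

Lemma is_derive_glue (f g1 g2 : R -> R) x0 l d : 0 < d ->
  (forall s, x0 - d < s <= x0 -> f s = g1 s) -> (forall s, x0 <= s < x0 + d -> f s = g2 s) ->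
  is_derive g1 x0 l -> is_derive g2 x0 l -> is_derive f x0 l.
Proof.
  intros Hd0 H1 H2 D1 D2. apply is_derive_Reals. apply is_derive_Reals in D1, D2.
  intros eps Heps. destruct (D1 eps Heps) as [d1 Hd1]. destruct (D2 eps Heps) as [d2 Hd2].
  assert (Hd : 0 < Rmin d (Rmin d1 d2)) by (apply Rmin_pos; [lra | apply Rmin_pos; apply cond_pos]).
  exists (mkposreal _ Hd). intros h Hh0 Hh. simpl in Hh.
  pose proof (Rmin_l d (Rmin d1 d2)). pose proof (Rmin_r d (Rmin d1 d2)).
  pose proof (Rmin_l d1 d2). pose proof (Rmin_r d1 d2).
  unfold Rabs in Hh; destruct Rcase_abs in Hh.
  - rewrite (H1 (x0 + h)), (H1 x0) by lra. apply Hd1; auto. unfold Rabs; destruct Rcase_abs; lra.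
  - rewrite (H2 (x0 + h)), (H2 x0) by lra. apply Hd2; auto. unfold Rabs; destruct Rcase_abs; lra.
Qed.

Lemma is_derive_piecewise3 (f g1 g2 g3 df : R -> R) a b s : a < b ->
  (forall s, s <= a -> f s = g1 s) ->
  (forall s, a <= s <= b -> f s = g2 s) ->
  (forall s, b <= s -> f s = g3 s) ->
  (forall s, s <= a -> is_derive g1 s (df s)) ->
  (forall s, a <= s <= b -> is_derive g2 s (df s)) ->
  (forall s, b <= s -> is_derive g3 s (df s)) ->
  is_derive f s (df s).
Proof.
  intros Hab F1 F2 F3 D1 D2 D3.
  destruct (Rtotal_order s a) as [Hs|[->|Hs]].
  - apply (is_derive_ext_loc g1); [|apply D1; lra].
    apply (locally_of_ball _ (a - s)); [lra|]. intros y Hy.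
    symmetry. apply F1. unfold Rabs in Hy; destruct Rcase_abs in Hy; lra.
  - apply (is_derive_glue f g1 g2 a _ (b - a)); [lra | | | apply D1; lra | apply D2; lra].
    + intros; apply F1; lra.
    + intros; apply F2; lra.
  - destruct (Rtotal_order s b) as [Hs'|[->|Hs']].
    + apply (is_derive_ext_loc g2); [|apply D2; lra].
      apply (locally_of_ball _ (Rmin (s - a) (b - s))); [apply Rmin_pos; lra|]. intros y Hy.
      pose proof (Rmin_l (s - a) (b - s)). pose proof (Rmin_r (s - a) (b - s)).
      symmetry. apply F2. unfold Rabs in Hy; destruct Rcase_abs in Hy; lra.
    + apply (is_derive_glue f g2 g3 b _ (b - a)); [lra | | | apply D2; lra | apply D3; lra].
      * intros; apply F2; lra.
      * intros; apply F3; lra.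
    + apply (is_derive_ext_loc g3); [|apply D3; lra].
      apply (locally_of_ball _ (s - b)); [lra|]. intros y Hy.
      symmetry. apply F3. unfold Rabs in Hy; destruct Rcase_abs in Hy; lra.
Qed.

(** * Folds *)

(* The fold of radius [r] along a line: [s] is the signed distance to the
   line, and the cross-section [s |-> (s + fold_h r s, fold_v r s)] runs
   straight up to the line, around a half circle of radius [r] (arc length
   [fold_arc r s]), and straight back in the opposite direction. *)
Definition fold_arc (r s : R) : R := Rmin (Rmax s 0) (PI * r).
Definition fold_h (r s : R) : R :=
  - (fold_arc r s + 2 * Rmax (s - PI * r) 0) + r * sin (fold_arc r s / r).
Definition fold_v (r s : R) : R := r * (1 - cos (fold_arc r s / r)).
Definition fold_dh (r s : R) : R := cos (fold_arc r s / r) - 1.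
Definition fold_dv (r s : R) : R := sin (fold_arc r s / r).

Section Fold.
Variable r : R.
Hypothesis r_pos : 0 < r.

Lemma PI_r_pos : 0 < PI * r.
Proof. pose proof PI_gt_3. nra. Qed.

Lemma PI_r_div : PI * r / r = PI.
Proof. field. lra. Qed.

Lemma fold_arc_before s : s <= 0 -> fold_arc r s = 0.
Proof.
  intros Hs. pose proof PI_r_pos. unfold fold_arc.
  rewrite Rmax_right by lra. apply Rmin_left. lra.
Qed.

Lemma fold_arc_on s : 0 <= s <= PI * r -> fold_arc r s = s.
Proof. intros Hs. unfold fold_arc. rewrite Rmax_left by lra. apply Rmin_left. lra. Qed.

Lemma fold_arc_after s : PI * r <= s -> fold_arc r s = PI * r.
Proof.
  intros Hs. pose proof PI_r_pos. unfold fold_arc.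
  rewrite Rmax_left by lra. apply Rmin_right. lra.
Qed.

Lemma fold_arc_lipschitz s t : Rabs (fold_arc r s - fold_arc r t) <= Rabs (s - t).
Proof.
  pose proof PI_r_pos.
  destruct (Rle_dec s 0); destruct (Rle_dec t 0);
  destruct (Rle_dec s (PI * r)); destruct (Rle_dec t (PI * r));
  repeat first [ rewrite (fold_arc_before s) by lra | rewrite (fold_arc_before t) by lra
               | rewrite (fold_arc_on s) by lra | rewrite (fold_arc_on t) by lra
               | rewrite (fold_arc_after s) by lra | rewrite (fold_arc_after t) by lra ];
  unfold Rabs; repeat destruct Rcase_abs; lra.
Qed.

Lemma fold_h_before s : s <= 0 -> fold_h r s = 0.
Proof.
  intros Hs. pose proof PI_r_pos. unfold fold_h.
  rewrite fold_arc_before, Rmax_right by lra. unfold Rdiv. rewrite Rmult_0_l, sin_0. ring.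
Qed.

Lemma fold_h_on s : 0 <= s <= PI * r -> fold_h r s = - s + r * sin (s / r).
Proof. intros Hs. unfold fold_h. rewrite fold_arc_on, Rmax_right by lra. ring. Qed.

Lemma fold_h_after s : PI * r <= s -> fold_h r s = PI * r - 2 * s.
Proof.
  intros Hs. unfold fold_h. rewrite fold_arc_after, Rmax_left, PI_r_div, sin_PI by lra. ring.
Qed.

Lemma fold_v_before s : s <= 0 -> fold_v r s = 0.
Proof. intros Hs. unfold fold_v. rewrite fold_arc_before by lra. unfold Rdiv. rewrite Rmult_0_l, cos_0. ring. Qed.

Lemma fold_v_on s : 0 <= s <= PI * r -> fold_v r s = r * (1 - cos (s / r)).
Proof. intros Hs. unfold fold_v. rewrite fold_arc_on by lra. reflexivity. Qed.

Lemma fold_v_after s : PI * r <= s -> fold_v r s = 2 * r.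
Proof. intros Hs. unfold fold_v. rewrite fold_arc_after, PI_r_div, cos_PI by lra. ring. Qed.

Lemma fold_dh_before s : s <= 0 -> fold_dh r s = 0.
Proof. intros Hs. unfold fold_dh. rewrite fold_arc_before by lra. unfold Rdiv. rewrite Rmult_0_l, cos_0. ring. Qed.

Lemma fold_dh_after s : PI * r <= s -> fold_dh r s = -2.
Proof. intros Hs. unfold fold_dh. rewrite fold_arc_after, PI_r_div, cos_PI by lra. ring. Qed.

Lemma fold_dv_before s : s <= 0 -> fold_dv r s = 0.
Proof. intros Hs. unfold fold_dv. rewrite fold_arc_before by lra. unfold Rdiv. rewrite Rmult_0_l. apply sin_0. Qed.

Lemma fold_dv_after s : PI * r <= s -> fold_dv r s = 0.
Proof. intros Hs. unfold fold_dv. rewrite fold_arc_after, PI_r_div by lra. apply sin_PI. Qed.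

Lemma fold_unit_speed s : (1 + fold_dh r s) ^ 2 + fold_dv r s ^ 2 = 1.
Proof.
  unfold fold_dh, fold_dv. pose proof (sin2_cos2_pow (fold_arc r s / r)). nra.
Qed.

Lemma fold_h_derive s : is_derive (fold_h r) s (fold_dh r s).
Proof.
  pose proof PI_r_pos.
  apply (is_derive_piecewise3 _ (fun _ => 0) (fun s => - s + r * sin (s / r))
           (fun s => PI * r - 2 * s) _ 0 (PI * r)); try lra.
  - exact fold_h_before.
  - exact fold_h_on.
  - exact fold_h_after.
  - intros t Ht. rewrite fold_dh_before by lra. auto_derive; auto.
  - intros t Ht. unfold fold_dh. rewrite fold_arc_on by lra.
    auto_derive; auto. unfold Rdiv. field. lra.
  - intros t Ht. rewrite fold_dh_after by lra. auto_derive; auto. ring.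
Qed.

Lemma fold_v_derive s : is_derive (fold_v r) s (fold_dv r s).
Proof.
  pose proof PI_r_pos.
  apply (is_derive_piecewise3 _ (fun _ => 0) (fun s => r * (1 - cos (s / r)))
           (fun _ => 2 * r) _ 0 (PI * r)); try lra.
  - exact fold_v_before.
  - exact fold_v_on.
  - exact fold_v_after.
  - intros t Ht. rewrite fold_dv_before by lra. auto_derive; auto.
  - intros t Ht. unfold fold_dv. rewrite fold_arc_on by lra.
    auto_derive; auto. unfold Rdiv. field. lra.
  - intros t Ht. rewrite fold_dv_after by lra. auto_derive; auto.
Qed.

Lemma fold_arc_div_lipschitz s t :
  Rabs (fold_arc r s / r - fold_arc r t / r) <= Rabs (s - t) / r.
Proof.
  replace (fold_arc r s / r - fold_arc r t / r) with ((fold_arc r s - fold_arc r t) / r)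
    by (field; lra).
  rewrite Rabs_div, (Rabs_right r) by lra.
  apply Rmult_le_compat_r; [apply Rlt_le, Rinv_0_lt_compat; lra | apply fold_arc_lipschitz].
Qed.

Lemma fold_dh_lipschitz s t : Rabs (fold_dh r s - fold_dh r t) <= Rabs (s - t) / r.
Proof.
  unfold fold_dh. replace (cos (fold_arc r s / r) - 1 - (cos (fold_arc r t / r) - 1))
    with (cos (fold_arc r s / r) - cos (fold_arc r t / r)) by ring.
  eapply Rle_trans; [apply cos_lipschitz | apply fold_arc_div_lipschitz].
Qed.

Lemma fold_dv_lipschitz s t : Rabs (fold_dv r s - fold_dv r t) <= Rabs (s - t) / r.
Proof. eapply Rle_trans; [apply sin_lipschitz | apply fold_arc_div_lipschitz]. Qed.

End Fold.

(** * Length of curves *)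

Lemma is_partition_le a b ts : is_partition a b ts -> a <= b.
Proof.
  revert a. induction ts as [|t ts IH]; simpl; intros a H; [lra|].
  destruct H as [H1 H2]. specialize (IH _ H2). lra.
Qed.

Lemma is_partition_app a m b l1 l2 :
  is_partition a m l1 -> is_partition m b l2 -> is_partition a b (l1 ++ l2).
Proof.
  revert a. induction l1 as [|t l IH]; simpl; intros a H1 H2; [subst; auto|].
  destruct H1. split; [auto | eapply IH; eauto].
Qed.

Lemma poly_len_app {A} (d : A -> A -> R) g a m l1 l2 : is_partition a m l1 ->
  poly_len d g a (l1 ++ l2) = poly_len d g a l1 + poly_len d g m l2.
Proof.
  revert a. induction l1 as [|t l IH]; simpl; intros a H1; [subst; ring|].
  destruct H1 as [_ H1]. rewrite (IH t H1). ring.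
Qed.

Lemma poly_len_ge_chord {A} (d : A -> A -> R) g :
  (forall x, d x x = 0) -> (forall x y z, d x z <= d x y + d y z) ->
  forall l a m, is_partition a m l -> d (g a) (g m) <= poly_len d g a l.
Proof.
  intros D0 Dt. induction l as [|t l IH]; simpl; intros a m H.
  - subst. rewrite D0. lra.
  - destruct H as [_ H]. specialize (IH t m H). pose proof (Dt (g a) (g t) (g m)). lra.
Qed.

Fixpoint uniform_points (u h : R) (n : nat) : list R :=
  match n with O => nil | S k => (u + h) :: uniform_points (u + h) h k end.

Definition subdivide (u w : R) (n : nat) : list R := uniform_points u ((w - u) / INR n) n.

Fixpoint refine_partition (n : nat) (t0 : R) (ts : list R) : list R :=
  match ts with nil => nil | t :: ts' => subdivide t0 t n ++ refine_partition n t ts' end.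

Fixpoint mesh_lt (del t0 : R) (l : list R) : Prop :=
  match l with nil => True | t :: l' => t - t0 < del /\ mesh_lt del t l' end.

Lemma is_partition_uniform_points u h n :
  0 < h -> is_partition u (u + INR n * h) (uniform_points u h n).
Proof.
  revert u. induction n as [|n IH]; cbn [uniform_points is_partition]; intros u Hh; [simpl; ring|].
  split; [lra|]. replace (u + INR (S n) * h) with (u + h + INR n * h) by (rewrite S_INR; ring).
  exact (IH (u + h) Hh).
Qed.

Lemma is_partition_subdivide u w n : (0 < n)%nat -> u < w -> is_partition u w (subdivide u w n).
Proof.
  intros Hn Huw. unfold subdivide. assert (0 < INR n) by (apply lt_0_INR; auto).
  replace w with (u + INR n * ((w - u) / INR n)) at 1 by (field; lra).
  apply is_partition_uniform_points. apply Rdiv_lt_0_compat; lra.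
Qed.

Lemma is_partition_refine n a b ts :
  (0 < n)%nat -> is_partition a b ts -> is_partition a b (refine_partition n a ts).
Proof.
  revert a. induction ts as [|t ts IH]; simpl; intros a Hn H; auto.
  destruct H. eapply is_partition_app; [apply is_partition_subdivide | apply IH]; eauto.
Qed.

Lemma poly_len_refine_ge {A} (d : A -> A -> R) g n :
  (0 < n)%nat -> (forall x, d x x = 0) -> (forall x y z, d x z <= d x y + d y z) ->
  forall ts a b, is_partition a b ts ->
  poly_len d g a ts <= poly_len d g a (refine_partition n a ts).
Proof.
  intros Hn D0 Dt. induction ts as [|t ts IH]; simpl; intros a b H; [lra|].
  destruct H as [Hat H]. rewrite (poly_len_app d g a t) by (apply is_partition_subdivide; auto).
  pose proof (poly_len_ge_chord d g D0 Dt _ a t (is_partition_subdivide a t n Hn Hat)).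
  specialize (IH t b H). lra.
Qed.

Lemma mesh_lt_app del a m l1 l2 :
  is_partition a m l1 -> mesh_lt del a l1 -> mesh_lt del m l2 -> mesh_lt del a (l1 ++ l2).
Proof.
  revert a. induction l1 as [|t l IH]; simpl; intros a H1 F1 F2; [subst; auto|].
  destruct H1, F1. split; [auto | eapply IH; eauto].
Qed.

Lemma mesh_lt_refine n a b del ts : (0 < n)%nat -> (b - a) / INR n < del ->
  forall t0, a <= t0 -> is_partition t0 b ts -> mesh_lt del t0 (refine_partition n t0 ts).
Proof.
  intros Hn Hd. assert (HI : 0 < INR n) by (apply lt_0_INR; auto).
  assert (Hpts : forall u h k, h < del -> mesh_lt del u (uniform_points u h k)).
  { intros u h k Hh. revert u. induction k as [|k IH]; simpl; intros u; auto. split; [lra | apply IH]. }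
  induction ts as [|t ts IH]; simpl; intros t0 Ha H; auto.
  destruct H as [H0 H1]. eapply mesh_lt_app; [apply is_partition_subdivide; auto | | apply IH; auto; lra].
  apply Hpts. pose proof (is_partition_le _ _ _ H1).
  apply Rle_lt_trans with ((b - a) / INR n); auto.
  apply Rmult_le_compat_r; [apply Rlt_le, Rinv_0_lt_compat; auto | lra].
Qed.

Lemma dist2_refl p : dist2 p p = 0.
Proof. unfold dist2. replace ((fst p - fst p) ^ 2 + (snd p - snd p) ^ 2) with 0 by ring. apply sqrt_0. Qed.

Lemma sum_sq_nonneg a b : 0 <= a ^ 2 + b ^ 2.
Proof. apply Rplus_le_le_0_compat; apply pow2_ge_0. Qed.

Lemma cauchy_schwarz2 a1 a2 b1 b2 : a1 * b1 + a2 * b2 <= sqrt (a1 ^ 2 + a2 ^ 2) * sqrt (b1 ^ 2 + b2 ^ 2).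
Proof.
  rewrite <- sqrt_mult by apply sum_sq_nonneg.
  destruct (Rle_dec (a1 * b1 + a2 * b2) 0).
  - pose proof (sqrt_pos ((a1 ^ 2 + a2 ^ 2) * (b1 ^ 2 + b2 ^ 2))). lra.
  - rewrite <- (sqrt_pow2 (a1 * b1 + a2 * b2)) at 1 by lra. apply sqrt_le_1_alt.
    pose proof (pow2_ge_0 (a1 * b2 - a2 * b1)). nra.
Qed.

Lemma cauchy_schwarz3 a1 a2 a3 b1 b2 b3 :
  a1 * b1 + a2 * b2 + a3 * b3 <= sqrt (a1 ^ 2 + a2 ^ 2 + a3 ^ 2) * sqrt (b1 ^ 2 + b2 ^ 2 + b3 ^ 2).
Proof.
  rewrite <- sqrt_mult by nra.
  destruct (Rle_dec (a1 * b1 + a2 * b2 + a3 * b3) 0).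
  - pose proof (sqrt_pos ((a1 ^ 2 + a2 ^ 2 + a3 ^ 2) * (b1 ^ 2 + b2 ^ 2 + b3 ^ 2))). lra.
  - rewrite <- (sqrt_pow2 (a1 * b1 + a2 * b2 + a3 * b3)) at 1 by lra. apply sqrt_le_1_alt.
    pose proof (pow2_ge_0 (a1 * b2 - a2 * b1)). pose proof (pow2_ge_0 (a1 * b3 - a3 * b1)).
    pose proof (pow2_ge_0 (a2 * b3 - a3 * b2)). nra.
Qed.

Lemma dist2_triangle p q r : dist2 p r <= dist2 p q + dist2 q r.
Proof.
  unfold dist2.
  replace (fst p - fst r) with ((fst p - fst q) + (fst q - fst r)) by ring.
  replace (snd p - snd r) with ((snd p - snd q) + (snd q - snd r)) by ring.
  set (u1 := fst p - fst q). set (u2 := snd p - snd q).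
  set (w1 := fst q - fst r). set (w2 := snd q - snd r). clearbody u1 u2 w1 w2.
  pose proof (cauchy_schwarz2 u1 u2 w1 w2).
  pose proof (sqrt_pos (u1 ^ 2 + u2 ^ 2)). pose proof (sqrt_pos (w1 ^ 2 + w2 ^ 2)).
  pose proof (pow2_sqrt _ (sum_sq_nonneg u1 u2)). pose proof (pow2_sqrt _ (sum_sq_nonneg w1 w2)).
  rewrite <- (sqrt_pow2 (sqrt (u1 ^ 2 + u2 ^ 2) + sqrt (w1 ^ 2 + w2 ^ 2))) by lra.
  apply sqrt_le_1_alt. nra.
Qed.

Lemma Rabs_fst_le_dist2 p q : Rabs (fst p - fst q) <= dist2 p q.
Proof.
  unfold dist2. rewrite <- sqrt_Rsqr_abs. apply sqrt_le_1_alt.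
  unfold Rsqr. pose proof (pow2_ge_0 (snd p - snd q)). lra.
Qed.

Lemma Rabs_snd_le_dist2 p q : Rabs (snd p - snd q) <= dist2 p q.
Proof.
  unfold dist2. rewrite <- sqrt_Rsqr_abs. apply sqrt_le_1_alt.
  unfold Rsqr. pose proof (pow2_ge_0 (fst p - fst q)). lra.
Qed.

Lemma dist2_le_Rabs_sum p q : dist2 p q <= Rabs (fst p - fst q) + Rabs (snd p - snd q).
Proof.
  unfold dist2. pose proof (Rabs_pos (fst p - fst q)). pose proof (Rabs_pos (snd p - snd q)).
  rewrite <- (sqrt_pow2 (Rabs (fst p - fst q) + Rabs (snd p - snd q))) by lra.
  apply sqrt_le_1_alt.
  rewrite <- (pow2_abs (fst p - fst q)) at 1. rewrite <- (pow2_abs (snd p - snd q)) at 1. nra.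
Qed.

Definition clamp (a b s : R) : R := Rmax a (Rmin b s).

Lemma curve_uniformly_continuous g a b : a <= b -> continuous_curve_on g a b ->
  forall eta, 0 < eta -> exists del, 0 < del /\ forall s s', a <= s <= b -> a <= s' <= b ->
    Rabs (s - s') < del -> dist2 (g s) (g s') < eta.
Proof.
  intros Hab Hc eta Heta.
  assert (Hclamp : forall s, a <= clamp a b s <= b)
    by (intros; unfold clamp, Rmax, Rmin; repeat destruct Rle_dec; lra).
  assert (Hclamp_id : forall s, a <= s <= b -> clamp a b s = s)
    by (intros; unfold clamp, Rmax, Rmin; repeat destruct Rle_dec; lra).
  assert (Hcoord : forall proj : R2 -> R, (forall p q, Rabs (proj p - proj q) <= dist2 p q) ->
            forall x, a <= x <= b -> continuity_pt (fun s => proj (g (clamp a b s))) x).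
  { intros proj Hp x Hx. apply continuity_pt_locally. intros eps.
    destruct (Hc x Hx eps (cond_pos eps)) as [del [Hdel H]].
    exists (mkposreal del Hdel). intros u Hu. change (Rabs (u - x) < del) in Hu.
    rewrite (Hclamp_id x Hx). eapply Rle_lt_trans; [apply Hp | apply H; [apply Hclamp|]].
    unfold clamp, Rmax, Rmin in *; repeat destruct Rle_dec;
      unfold Rabs in *; repeat destruct Rcase_abs; lra. }
  assert (He2 : 0 < eta / 2) by lra.
  destruct (Heine_cor2 (Hcoord fst Rabs_fst_le_dist2) (mkposreal _ He2)) as [d1 H1].
  destruct (Heine_cor2 (Hcoord snd Rabs_snd_le_dist2) (mkposreal _ He2)) as [d2 H2].
  exists (Rmin d1 d2). split; [apply Rmin_pos; apply cond_pos|].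
  intros s s' Hs Hs' Hss. pose proof (Rmin_l d1 d2). pose proof (Rmin_r d1 d2).
  specialize (H1 s s' Hs Hs' ltac:(lra)). specialize (H2 s s' Hs Hs' ltac:(lra)).
  simpl in H1, H2. rewrite !Hclamp_id in H1, H2 by auto.
  eapply Rle_lt_trans; [apply dist2_le_Rabs_sum | lra].
Qed.

Fixpoint chords_lt (eta : R) (g : R -> R2) (t0 : R) (l : list R) : Prop :=
  match l with nil => True | t :: l' => dist2 (g t0) (g t) < eta /\ chords_lt eta g t l' end.

Lemma chords_lt_of_mesh_lt g a b del eta :
  (forall s s', a <= s <= b -> a <= s' <= b -> Rabs (s - s') < del -> dist2 (g s) (g s') < eta) ->
  forall l t0, a <= t0 -> is_partition t0 b l -> mesh_lt del t0 l -> chords_lt eta g t0 l.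
Proof.
  intros HU. induction l as [|t l IH]; simpl; intros t0 Ha H F; auto.
  destruct H as [H1 H2], F as [F1 F2]. pose proof (is_partition_le _ _ _ H2).
  split; [apply HU; try lra; unfold Rabs; destruct Rcase_abs; lra | apply IH; auto; lra].
Qed.

Lemma poly_len_nonneg {A} (d : A -> A -> R) g t0 l :
  (forall x y, 0 <= d x y) -> 0 <= poly_len d g t0 l.
Proof.
  intros Hd. revert t0. induction l as [|t l IH]; simpl; intros t0; [lra|].
  pose proof (Hd (g t0) (g t)). pose proof (IH t). lra.
Qed.

Section ChordBounds.
Variables (P : R2 -> R3) (O : R2 -> Prop) (K : R).
Hypothesis K_pos : 0 < K.
Hypothesis chord_le : forall p q, O p -> O q -> dist3 (P p) (P q) <= dist2 p q.
Hypothesis chord_ge : forall p q, O p -> O q -> dist2 p q - K * dist2 p q ^ 2 <= dist3 (P p) (P q).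
Variables (g : R -> R2) (a b : R).
Hypothesis g_in : forall s, a <= s <= b -> O (g s).

Lemma poly_len_map_le ts t0 : a <= t0 -> is_partition t0 b ts ->
  poly_len dist3 (fun s => P (g s)) t0 ts <= poly_len dist2 g t0 ts.
Proof.
  revert t0. induction ts as [|t ts IH]; simpl; intros t0 Ht0 H; [lra|].
  destruct H as [H1 H2]. pose proof (is_partition_le _ _ _ H2).
  specialize (IH t ltac:(lra) H2). pose proof (chord_le (g t0) (g t) (g_in t0 ltac:(lra)) (g_in t ltac:(lra))).
  lra.
Qed.

Lemma poly_len_map_ge eta ts t0 : 0 <= eta -> a <= t0 -> is_partition t0 b ts -> chords_lt eta g t0 ts ->
  (1 - K * eta) * poly_len dist2 g t0 ts <= poly_len dist3 (fun s => P (g s)) t0 ts.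
Proof.
  intros He. revert t0. induction ts as [|t ts IH]; simpl; intros t0 Ht0 H Hc; [lra|].
  destruct H as [H1 H2], Hc as [Hc1 Hc2]. pose proof (is_partition_le _ _ _ H2).
  specialize (IH t ltac:(lra) H2 Hc2).
  pose proof (chord_ge (g t0) (g t) (g_in t0 ltac:(lra)) (g_in t ltac:(lra))).
  set (d := dist2 (g t0) (g t)) in *. assert (0 <= d) by apply sqrt_pos.
  assert (0 <= K * d) by nra. assert (K * d ^ 2 <= K * eta * d) by nra. lra.
Qed.

Hypothesis a_le_b : a <= b.
Hypothesis g_cont : continuous_curve_on g a b.

(* Refining a partition can only increase the polygonal length in the plane,
   and a fine enough refinement has chords so short that the defect
   [K * dist2 ^ 2] is at most the fraction [K * eta] of the length. *)
Lemma poly_len_defect_refinement ts eta : is_partition a b ts -> 0 < eta -> K * eta <= 1 ->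
  exists ts', is_partition a b ts' /\
    (1 - K * eta) * poly_len dist2 g a ts <= poly_len dist3 (fun s => P (g s)) a ts'.
Proof.
  intros Hts Heta HKeta.
  destruct (curve_uniformly_continuous g a b a_le_b g_cont eta Heta) as [del [Hdel HU]].
  destruct (INR_unbounded ((b - a) / del)) as [n Hn].
  assert (Hn0 : (0 < n)%nat).
  { destruct n; [|lia]. simpl in Hn.
    assert (0 <= (b - a) / del) by (apply Rmult_le_pos; [lra | apply Rlt_le, Rinv_0_lt_compat; lra]).
    lra. }
  assert (HIn : 0 < INR n) by (apply lt_0_INR; auto).
  assert (Hmesh : (b - a) / INR n < del).
  { apply (Rmult_lt_reg_r (INR n)); auto. unfold Rdiv. rewrite Rmult_assoc, Rinv_l by lra.
    apply (Rmult_lt_reg_r (/ del)); [apply Rinv_0_lt_compat; lra|].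
    replace (del * INR n * / del) with (INR n) by (field; lra). lra. }
  exists (refine_partition n a ts).
  assert (Hp' : is_partition a b (refine_partition n a ts)) by (apply is_partition_refine; auto).
  split; [exact Hp'|]. eapply Rle_trans.
  - apply Rmult_le_compat_l; [lra|].
    exact (poly_len_refine_ge dist2 g n Hn0 dist2_refl dist2_triangle ts a b Hts).
  - apply poly_len_map_ge; [lra | lra | exact Hp'|].
    apply (chords_lt_of_mesh_lt g a b del eta HU _ a (Rle_refl a) Hp').
    exact (mesh_lt_refine n a b del ts Hn0 Hmesh a (Rle_refl a) Hts).
Qed.

End ChordBounds.

Lemma le_of_defect_bound K x L : 0 < K -> 0 <= L ->
  (forall eta, 0 < eta -> K * eta <= 1 -> (1 - K * eta) * x <= L) -> x <= L.
Proof.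
  intros HK HL H. destruct (Rle_dec x L) as [|Hgt]; auto.
  set (eta := (x - L) / (2 * K * x)).
  assert (Heta : 0 < eta) by (unfold eta; apply Rdiv_lt_0_compat; nra).
  assert (HKeta : K * eta = (x - L) / (2 * x)) by (unfold eta; field; lra).
  assert (HKeta1 : K * eta <= 1).
  { rewrite HKeta. apply (Rmult_le_reg_r (2 * x)); [lra|].
    unfold Rdiv. rewrite Rmult_assoc, Rinv_l by lra. lra. }
  specialize (H eta Heta HKeta1).
  replace ((1 - K * eta) * x) with ((x + L) / 2) in H by (unfold eta; field; lra). lra.
Qed.

Lemma length_preserving_of_chord_bounds (P : R2 -> R3) (O : R2 -> Prop) (K : R) : 0 < K ->
  (forall p q, O p -> O q -> dist3 (P p) (P q) <= dist2 p q) ->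
  (forall p q, O p -> O q -> dist2 p q - K * dist2 p q ^ 2 <= dist3 (P p) (P q)) ->
  length_preserving_on O P.
Proof.
  intros HK Hle Hge g a b Hab Hc HO. unfold curve_length.
  set (E2 := fun s => exists ts, is_partition a b ts /\ s = poly_len dist2 g a ts).
  set (E3 := fun s => exists ts, is_partition a b ts /\ s = poly_len dist3 (fun s => P (g s)) a ts).
  pose proof (Lub_Rbar_correct E2) as H2. pose proof (Lub_Rbar_correct E3) as H3.
  assert (Hts0 : exists ts0, is_partition a b ts0).
  { destruct (Rle_lt_or_eq_dec a b Hab) as [Hlt|Heq]; [exists (b :: nil) | exists nil]; simpl; auto. }
  destruct Hts0 as [ts0 Hts0].
  apply Rbar_le_antisym.
  - apply (proj2 H3). intros x [ts [Hts ->]].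
    apply Rbar_le_trans with (Finite (poly_len dist2 g a ts)).
    + apply (poly_len_map_le P O Hle g a b HO ts a (Rle_refl a) Hts).
    + apply (proj1 H2). exists ts; auto.
  - apply (proj2 H2). intros x [ts [Hts ->]].
    destruct (Lub_Rbar E3) as [L| |] eqn:EL; simpl; auto.
    + assert (HL : forall y, E3 y -> y <= L) by (intros y Hy; exact (proj1 H3 y Hy)).
      apply (le_of_defect_bound K); auto.
      * apply Rle_trans with (poly_len dist3 (fun s => P (g s)) a ts0);
          [apply poly_len_nonneg; intros; apply sqrt_pos | apply HL; exists ts0; auto].
      * intros eta Heta HKeta.
        destruct (poly_len_defect_refinement P O K HK Hge g a b HO Hab Hc ts eta Hts Heta HKeta)
          as [ts' [Hts' Hdef]].
        assert (poly_len dist3 (fun s => P (g s)) a ts' <= L) by (apply HL; exists ts'; auto). lra.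
    + apply (proj1 H3 (poly_len dist3 (fun s => P (g s)) a ts0)). exists ts0; auto.
Qed.

(** * The folded band *)

(* [r1] and [r3] are convertible, so a rewrite with a lemma about the third
   fold must name its argument, or it may match the first fold instead. *)
Definition r1 : R := 1/10.
Definition r2 : R := 1/5.
Definition r3 : R := 1/10.

(* The first and third fold lines are parallel; the offset of the second one
   and the length of the band are tuned so that the three folds carry the end
   [x = band_length] of the band onto the end [x = 0], turned over. *)
Definition s1 (x y : R) : R := 4/5 * x - 3/5 * y - 1.
Definition s2 (x y : R) : R := 24/25 * x + 7/25 * y - (33/5 - PI/25).
Definition s3 (x y : R) : R := 4/5 * x - 3/5 * y - 10.
Definition band_length : R := 72/5.

(* Each fold displaces the part of the band beyond its line along the image,
   under the earlier folds, of the unit normal of that line; the heights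
   alternate in sign because every fold turns the band over. *)
Definition PhiX (x y : R) : R := x + 4/5 * fold_h r1 (s1 x y) - 4/5 * fold_h r3 (s3 x y).
Definition PhiY (x y : R) : R :=
  y - 3/5 * fold_h r1 (s1 x y) + fold_h r2 (s2 x y) - 3/5 * fold_h r3 (s3 x y).
Definition PhiZ (x y : R) : R := fold_v r1 (s1 x y) - fold_v r2 (s2 x y) + fold_v r3 (s3 x y).
Definition Phi (p : R2) : R3 :=
  ((PhiX (fst p) (snd p), PhiY (fst p) (snd p)), PhiZ (fst p) (snd p)).

Definition in_band (x y : R) : Prop := 0 <= x <= band_length /\ -1 <= y <= 1.

Lemma r123_pos : 0 < r1 /\ 0 < r2 /\ 0 < r3.
Proof. unfold r1, r2, r3. lra. Qed.

Lemma s2_below_s1 x y : in_band x y -> s2 x y + 2 <= s1 x y.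
Proof. unfold in_band, band_length, s1, s2. pose proof PI_4. lra. Qed.

Lemma s3_below_s2 x y : in_band x y -> s3 x y + 2 <= s2 x y.
Proof. unfold in_band, band_length, s2, s3. pose proof PI_gt_3. lra. Qed.

Lemma PI_r123_bounds :
  0 < PI * r1 < 1/2 /\ 0 < PI * r2 < 1 /\ 0 < PI * r3 < 1/2.
Proof. unfold r1, r2, r3. pose proof PI_gt_3. pose proof PI_4. lra. Qed.

Definition ds1 (vx vy : R) : R := 4/5 * vx - 3/5 * vy.
Definition ds2 (vx vy : R) : R := 24/25 * vx + 7/25 * vy.

Definition dPhiX (x y vx vy : R) : R :=
  vx + 4/5 * ds1 vx vy * fold_dh r1 (s1 x y) - 4/5 * ds1 vx vy * fold_dh r3 (s3 x y).
Definition dPhiY (x y vx vy : R) : R :=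
  vy - 3/5 * ds1 vx vy * fold_dh r1 (s1 x y) + ds2 vx vy * fold_dh r2 (s2 x y)
  - 3/5 * ds1 vx vy * fold_dh r3 (s3 x y).
Definition dPhiZ (x y vx vy : R) : R :=
  ds1 vx vy * fold_dv r1 (s1 x y) - ds2 vx vy * fold_dv r2 (s2 x y) + ds1 vx vy * fold_dv r3 (s3 x y).

Lemma Phi_derive_along x0 y0 vx vy wx wy wz tau :
  is_derive (fun t => wx * PhiX (x0 + t * vx) (y0 + t * vy) + wy * PhiY (x0 + t * vx) (y0 + t * vy)
                      + wz * PhiZ (x0 + t * vx) (y0 + t * vy)) tau
    (wx * dPhiX (x0 + tau * vx) (y0 + tau * vy) vx vy + wy * dPhiY (x0 + tau * vx) (y0 + tau * vy) vx vy
     + wz * dPhiZ (x0 + tau * vx) (y0 + tau * vy) vx vy).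
Proof.
  destruct r123_pos as [H1 [H2 H3]].
  assert (Dh : forall r s, 0 < r -> Derive (fold_h r) s = fold_dh r s)
    by (intros; apply is_derive_unique, fold_h_derive; auto).
  assert (Dv : forall r s, 0 < r -> Derive (fold_v r) s = fold_dv r s)
    by (intros; apply is_derive_unique, fold_v_derive; auto).
  assert (E1 : forall t, s1 (x0 + t * vx) (y0 + t * vy) = s1 x0 y0 + t * ds1 vx vy)
    by (intros; unfold s1, ds1; ring).
  assert (E2 : forall t, s2 (x0 + t * vx) (y0 + t * vy) = s2 x0 y0 + t * ds2 vx vy)
    by (intros; unfold s2, ds2; ring).
  assert (E3 : forall t, s3 (x0 + t * vx) (y0 + t * vy) = s3 x0 y0 + t * ds1 vx vy)
    by (intros; unfold s3, ds1; ring).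
  unfold dPhiX, dPhiY, dPhiZ. rewrite E1, E2, E3.
  set (a1 := s1 x0 y0). set (a2 := s2 x0 y0). set (a3 := s3 x0 y0).
  set (m1 := ds1 vx vy). set (m2 := ds2 vx vy).
  apply (is_derive_ext (fun t =>
     wx * (x0 + t * vx + 4/5 * fold_h r1 (a1 + t * m1) - 4/5 * fold_h r3 (a3 + t * m1))
   + wy * (y0 + t * vy - 3/5 * fold_h r1 (a1 + t * m1) + fold_h r2 (a2 + t * m2)
           - 3/5 * fold_h r3 (a3 + t * m1))
   + wz * (fold_v r1 (a1 + t * m1) - fold_v r2 (a2 + t * m2) + fold_v r3 (a3 + t * m1)))).
  { intros t. unfold PhiX, PhiY, PhiZ. rewrite E1, E2, E3. reflexivity. }
  clearbody a1 a2 a3 m1 m2. auto_derive.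
  - repeat match goal with
      | |- _ /\ _ => split
      | |- ex_derive (fun x => fold_h ?r x) ?s => exact (ex_intro _ _ (fold_h_derive r ltac:(assumption) s))
      | |- ex_derive (fun x => fold_v ?r x) ?s => exact (ex_intro _ _ (fold_v_derive r ltac:(assumption) s))
      | |- True => exact I
      end.
  - rewrite !Dh, !Dv by assumption. ring.
Qed.

(* Within the band the folds act one at a time, so the differential is that
   of a single fold composed with reflections; its isometry reduces to the
   unit speed of the fold profile. *)
Lemma dPhi_isometric x y vx vy : in_band x y ->
  dPhiX x y vx vy ^ 2 + dPhiY x y vx vy ^ 2 + dPhiZ x y vx vy ^ 2 = vx ^ 2 + vy ^ 2.
Proof.
  intros Hb. destruct r123_pos as [H1 [H2 H3]]. destruct PI_r123_bounds as [B1 [B2 B3]].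
  pose proof (s2_below_s1 x y Hb). pose proof (s3_below_s2 x y Hb).
  unfold dPhiX, dPhiY, dPhiZ.
  destruct (Rle_dec (s2 x y) 0) as [Hs2|Hs2].
  - rewrite (fold_dh_before r2 H2 (s2 x y)) by lra. rewrite (fold_dv_before r2 H2 (s2 x y)) by lra.
    rewrite (fold_dh_before r3 H3 (s3 x y)) by lra. rewrite (fold_dv_before r3 H3 (s3 x y)) by lra.
    pose proof (fold_unit_speed r1 (s1 x y)) as U.
    set (h := fold_dh r1 (s1 x y)) in *. set (v := fold_dv r1 (s1 x y)) in *. clearbody h v.
    transitivity (vx ^ 2 + vy ^ 2 + ds1 vx vy ^ 2 * ((1 + h) ^ 2 + v ^ 2 - 1));
      [unfold ds1; field | rewrite U; ring].
  - rewrite (fold_dh_after r1 H1 (s1 x y)) by lra. rewrite (fold_dv_after r1 H1 (s1 x y)) by lra.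
    destruct (Rle_dec (s3 x y) 0) as [Hs3|Hs3].
    + rewrite (fold_dh_before r3 H3 (s3 x y)) by lra. rewrite (fold_dv_before r3 H3 (s3 x y)) by lra.
      pose proof (fold_unit_speed r2 (s2 x y)) as U.
      set (h := fold_dh r2 (s2 x y)) in *. set (v := fold_dv r2 (s2 x y)) in *. clearbody h v.
      transitivity (vx ^ 2 + vy ^ 2 + ds2 vx vy ^ 2 * ((1 + h) ^ 2 + v ^ 2 - 1));
        [unfold ds1, ds2; field | rewrite U; ring].
    + rewrite (fold_dh_after r2 H2 (s2 x y)) by lra. rewrite (fold_dv_after r2 H2 (s2 x y)) by lra.
      pose proof (fold_unit_speed r3 (s3 x y)) as U.
      set (h := fold_dh r3 (s3 x y)) in *. set (v := fold_dv r3 (s3 x y)) in *. clearbody h v.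
      transitivity (vx ^ 2 + vy ^ 2 + ds1 vx vy ^ 2 * ((1 + h) ^ 2 + v ^ 2 - 1));
        [unfold ds1, ds2; field | rewrite U; ring].
Qed.

Lemma scaled_fold_variation r m s s' N : 0 < r -> Rabs m <= N -> Rabs (s - s') <= N ->
  Rabs (m * (fold_dh r s - fold_dh r s')) <= N ^ 2 / r /\
  Rabs (m * (fold_dv r s - fold_dv r s')) <= N ^ 2 / r.
Proof.
  intros Hr Hm Hs. pose proof (Rabs_pos m).
  assert (Hq : Rabs (s - s') / r <= N / r)
    by (apply Rmult_le_compat_r; [apply Rlt_le, Rinv_0_lt_compat|]; lra).
  replace (N ^ 2 / r) with (N * (N / r)) by (field; lra).
  rewrite !Rabs_mult. pose proof (fold_dh_lipschitz r Hr s s'). pose proof (fold_dv_lipschitz r Hr s s').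
  pose proof (Rabs_pos (fold_dh r s - fold_dh r s')). pose proof (Rabs_pos (fold_dv r s - fold_dv r s')).
  split; apply Rmult_le_compat; lra.
Qed.

Lemma fold_lines_shift_bound x0 y0 vx vy c : 0 <= c <= 1 ->
  let N := Rabs vx + Rabs vy in
  Rabs (s1 x0 y0 - s1 (x0 + c * vx) (y0 + c * vy)) <= N /\
  Rabs (s2 x0 y0 - s2 (x0 + c * vx) (y0 + c * vy)) <= N /\
  Rabs (s3 x0 y0 - s3 (x0 + c * vx) (y0 + c * vy)) <= N.
Proof.
  intros Hc N.
  replace (s1 x0 y0 - s1 (x0 + c * vx) (y0 + c * vy)) with (c * (3/5 * vy - 4/5 * vx)) by (unfold s1; ring).
  replace (s2 x0 y0 - s2 (x0 + c * vx) (y0 + c * vy)) with (c * (- (24/25) * vx - 7/25 * vy)) by (unfold s2; ring).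
  replace (s3 x0 y0 - s3 (x0 + c * vx) (y0 + c * vy)) with (c * (3/5 * vy - 4/5 * vx)) by (unfold s3; ring).
  assert (Hle : forall m, Rabs m <= N -> Rabs (c * m) <= N).
  { intros m Hm. rewrite Rabs_mult, (Rabs_right c) by lra. pose proof (Rabs_pos m). nra. }
  repeat split; apply Hle; unfold N, Rabs; repeat destruct Rcase_abs; lra.
Qed.

Lemma dPhi_variation x0 y0 vx vy c : 0 <= c <= 1 ->
  let N := Rabs vx + Rabs vy in
  Rabs (dPhiX x0 y0 vx vy - dPhiX (x0 + c * vx) (y0 + c * vy) vx vy)
  + Rabs (dPhiY x0 y0 vx vy - dPhiY (x0 + c * vx) (y0 + c * vy) vx vy)
  + Rabs (dPhiZ x0 y0 vx vy - dPhiZ (x0 + c * vx) (y0 + c * vy) vx vy) <= 58 * N ^ 2.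
Proof.
  intros Hc N. destruct r123_pos as [H1 [H2 H3]].
  assert (Hm1 : Rabs (ds1 vx vy) <= N) by (unfold N, ds1, Rabs; repeat destruct Rcase_abs; lra).
  assert (Hm2 : Rabs (ds2 vx vy) <= N) by (unfold N, ds2, Rabs; repeat destruct Rcase_abs; lra).
  destruct (fold_lines_shift_bound x0 y0 vx vy c Hc) as [Hs1 [Hs2 Hs3]]. fold N in Hs1, Hs2, Hs3.
  set (x' := x0 + c * vx) in *. set (y' := y0 + c * vy) in *.
  destruct (scaled_fold_variation _ _ _ _ _ H1 Hm1 Hs1) as [A1 B1].
  destruct (scaled_fold_variation _ _ _ _ _ H2 Hm2 Hs2) as [A2 B2].
  destruct (scaled_fold_variation _ _ _ _ _ H3 Hm1 Hs3) as [A3 B3].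
  replace (N ^ 2 / r1) with (10 * N ^ 2) in A1, B1 by (unfold r1; field).
  replace (N ^ 2 / r2) with (5 * N ^ 2) in A2, B2 by (unfold r2; field).
  replace (N ^ 2 / r3) with (10 * N ^ 2) in A3, B3 by (unfold r3; field).
  unfold dPhiX, dPhiY, dPhiZ.
  set (u1 := ds1 vx vy * (fold_dh r1 (s1 x0 y0) - fold_dh r1 (s1 x' y'))) in *.
  set (u2 := ds2 vx vy * (fold_dh r2 (s2 x0 y0) - fold_dh r2 (s2 x' y'))) in *.
  set (u3 := ds1 vx vy * (fold_dh r3 (s3 x0 y0) - fold_dh r3 (s3 x' y'))) in *.
  set (w1 := ds1 vx vy * (fold_dv r1 (s1 x0 y0) - fold_dv r1 (s1 x' y'))) in *.
  set (w2 := ds2 vx vy * (fold_dv r2 (s2 x0 y0) - fold_dv r2 (s2 x' y'))) in *.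
  set (w3 := ds1 vx vy * (fold_dv r3 (s3 x0 y0) - fold_dv r3 (s3 x' y'))) in *.
  match goal with |- Rabs ?X + Rabs ?Y + Rabs ?Z <= _ =>
    replace X with (4/5 * u1 - 4/5 * u3) by (unfold u1, u3; field);
    replace Y with (- (3/5) * u1 + u2 - 3/5 * u3) by (unfold u1, u2, u3; field);
    replace Z with (w1 - w2 + w3) by (unfold w1, w2, w3; ring) end.
  clearbody u1 u2 u3 w1 w2 w3.
  assert (Rabs (4/5 * u1 - 4/5 * u3) <= 16 * N ^ 2)
    by (clear - A1 A3; unfold Rabs in *; repeat destruct Rcase_abs; lra).
  assert (Rabs (- (3/5) * u1 + u2 - 3/5 * u3) <= 17 * N ^ 2)
    by (clear - A1 A2 A3; unfold Rabs in *; repeat destruct Rcase_abs; lra).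
  assert (Rabs (w1 - w2 + w3) <= 25 * N ^ 2)
    by (clear - B1 B2 B3; unfold Rabs in *; repeat destruct Rcase_abs; lra).
  lra.
Qed.

Lemma Phi_mvt x0 y0 x1 y1 wx wy wz :
  exists c, 0 < c < 1 /\
   wx * (PhiX x1 y1 - PhiX x0 y0) + wy * (PhiY x1 y1 - PhiY x0 y0) + wz * (PhiZ x1 y1 - PhiZ x0 y0)
   = wx * dPhiX (x0 + c * (x1 - x0)) (y0 + c * (y1 - y0)) (x1 - x0) (y1 - y0)
   + wy * dPhiY (x0 + c * (x1 - x0)) (y0 + c * (y1 - y0)) (x1 - x0) (y1 - y0)
   + wz * dPhiZ (x0 + c * (x1 - x0)) (y0 + c * (y1 - y0)) (x1 - x0) (y1 - y0).
Proof.
  destruct (MVT_cor2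
    (fun t => wx * PhiX (x0 + t * (x1 - x0)) (y0 + t * (y1 - y0))
            + wy * PhiY (x0 + t * (x1 - x0)) (y0 + t * (y1 - y0))
            + wz * PhiZ (x0 + t * (x1 - x0)) (y0 + t * (y1 - y0)))
    (fun t => wx * dPhiX (x0 + t * (x1 - x0)) (y0 + t * (y1 - y0)) (x1 - x0) (y1 - y0)
            + wy * dPhiY (x0 + t * (x1 - x0)) (y0 + t * (y1 - y0)) (x1 - x0) (y1 - y0)
            + wz * dPhiZ (x0 + t * (x1 - x0)) (y0 + t * (y1 - y0)) (x1 - x0) (y1 - y0))
    0 1) as [c [Hc1 Hc2]]; [lra | intros; apply is_derive_Reals, Phi_derive_along |].
  exists c. split; [lra|].
  replace (x0 + 1 * (x1 - x0)) with x1 in Hc1 by ring. replace (y0 + 1 * (y1 - y0)) with y1 in Hc1 by ring.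
  replace (x0 + 0 * (x1 - x0)) with x0 in Hc1 by ring. replace (y0 + 0 * (y1 - y0)) with y0 in Hc1 by ring.
  lra.
Qed.

Lemma in_band_segment x0 y0 x1 y1 t : in_band x0 y0 -> in_band x1 y1 -> 0 <= t <= 1 ->
  in_band (x0 + t * (x1 - x0)) (y0 + t * (y1 - y0)).
Proof. unfold in_band. intros [[? ?] [? ?]] [[? ?] [? ?]] [? ?]. nra. Qed.

Lemma dist3_Phi x0 y0 x1 y1 : dist3 (Phi (x0, y0)) (Phi (x1, y1)) =
  sqrt ((PhiX x1 y1 - PhiX x0 y0) ^ 2 + (PhiY x1 y1 - PhiY x0 y0) ^ 2 + (PhiZ x1 y1 - PhiZ x0 y0) ^ 2).
Proof. cbv [dist3 dot3 sub3 Phi Defs.c1 c2 c3 fst snd]. f_equal. ring. Qed.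

Lemma dist2_coords x0 y0 x1 y1 : dist2 (x0, y0) (x1, y1) = sqrt ((x1 - x0) ^ 2 + (y1 - y0) ^ 2).
Proof. unfold dist2. cbn [fst snd]. f_equal. ring. Qed.

Lemma Phi_chord_le x0 y0 x1 y1 : in_band x0 y0 -> in_band x1 y1 ->
  dist3 (Phi (x0, y0)) (Phi (x1, y1)) <= dist2 (x0, y0) (x1, y1).
Proof.
  intros H0 H1. rewrite dist3_Phi, dist2_coords. apply sqrt_le_1_alt.
  set (dX := PhiX x1 y1 - PhiX x0 y0). set (dY := PhiY x1 y1 - PhiY x0 y0).
  set (dZ := PhiZ x1 y1 - PhiZ x0 y0).
  destruct (Phi_mvt x0 y0 x1 y1 dX dY dZ) as [c [Hc E]]. fold dX dY dZ in E.
  pose proof (dPhi_isometric _ _ (x1 - x0) (y1 - y0) (in_band_segment x0 y0 x1 y1 c H0 H1 ltac:(lra))).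
  set (X1 := dPhiX (x0 + c * (x1 - x0)) (y0 + c * (y1 - y0)) (x1 - x0) (y1 - y0)) in *.
  set (X2 := dPhiY (x0 + c * (x1 - x0)) (y0 + c * (y1 - y0)) (x1 - x0) (y1 - y0)) in *.
  set (X3 := dPhiZ (x0 + c * (x1 - x0)) (y0 + c * (y1 - y0)) (x1 - x0) (y1 - y0)) in *.
  pose proof (pow2_ge_0 (dX - X1)). pose proof (pow2_ge_0 (dY - X2)). pose proof (pow2_ge_0 (dZ - X3)).
  nra.
Qed.

Lemma norm3_le_Rabs_sum z1 z2 z3 : sqrt (z1 ^ 2 + z2 ^ 2 + z3 ^ 2) <= Rabs z1 + Rabs z2 + Rabs z3.
Proof.
  pose proof (Rabs_pos z1). pose proof (Rabs_pos z2). pose proof (Rabs_pos z3).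
  rewrite <- (sqrt_pow2 (Rabs z1 + Rabs z2 + Rabs z3)) by lra. apply sqrt_le_1_alt.
  rewrite <- (pow2_abs z1), <- (pow2_abs z2), <- (pow2_abs z3). nra.
Qed.

(* Compare the chord with the differential at its initial point [p0]: by the
   mean value theorem the chord is the differential at an intermediate point,
   which differs from the one at [p0] by [O(|p1 - p0|^2)]. *)
Lemma Phi_chord_ge x0 y0 x1 y1 : in_band x0 y0 ->
  dist2 (x0, y0) (x1, y1) - 116 * dist2 (x0, y0) (x1, y1) ^ 2 <= dist3 (Phi (x0, y0)) (Phi (x1, y1)).
Proof.
  intros H0. rewrite dist3_Phi, dist2_coords.
  set (vx := x1 - x0). set (vy := y1 - y0).
  set (L := sqrt (vx ^ 2 + vy ^ 2)).
  assert (HL2 : L ^ 2 = vx ^ 2 + vy ^ 2) by (apply pow2_sqrt, sum_sq_nonneg).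
  assert (HL0 : 0 <= L) by apply sqrt_pos.
  set (dX := PhiX x1 y1 - PhiX x0 y0). set (dY := PhiY x1 y1 - PhiY x0 y0).
  set (dZ := PhiZ x1 y1 - PhiZ x0 y0).
  set (D := sqrt (dX ^ 2 + dY ^ 2 + dZ ^ 2)). assert (0 <= D) by apply sqrt_pos.
  destruct (Req_dec L 0) as [HL|HL]; [rewrite HL; lra|].
  set (Y1 := dPhiX x0 y0 vx vy). set (Y2 := dPhiY x0 y0 vx vy). set (Y3 := dPhiZ x0 y0 vx vy).
  destruct (Phi_mvt x0 y0 x1 y1 Y1 Y2 Y3) as [c [Hc E]]. fold vx vy dX dY dZ in E.
  assert (HY : sqrt (Y1 ^ 2 + Y2 ^ 2 + Y3 ^ 2) = L)
    by (unfold Y1, Y2, Y3; rewrite dPhi_isometric by exact H0; reflexivity).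
  pose proof (dPhi_variation x0 y0 vx vy c ltac:(lra)) as V. simpl in V. fold Y1 Y2 Y3 in V.
  set (X1 := dPhiX (x0 + c * vx) (y0 + c * vy) vx vy) in *.
  set (X2 := dPhiY (x0 + c * vx) (y0 + c * vy) vx vy) in *.
  set (X3 := dPhiZ (x0 + c * vx) (y0 + c * vy) vx vy) in *.
  assert (HN : (Rabs vx + Rabs vy) ^ 2 <= 2 * L ^ 2).
  { rewrite HL2, <- (pow2_abs vx), <- (pow2_abs vy). pose proof (pow2_ge_0 (Rabs vx - Rabs vy)). nra. }
  assert (Hdiff : sqrt ((Y1 - X1) ^ 2 + (Y2 - X2) ^ 2 + (Y3 - X3) ^ 2) <= 116 * L ^ 2)
    by (pose proof (norm3_le_Rabs_sum (Y1 - X1) (Y2 - X2) (Y3 - X3)); lra).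
  pose proof (cauchy_schwarz3 Y1 Y2 Y3 dX dY dZ) as CS1. rewrite HY in CS1.
  pose proof (cauchy_schwarz3 Y1 Y2 Y3 (Y1 - X1) (Y2 - X2) (Y3 - X3)) as CS2. rewrite HY in CS2.
  assert (HYY : Y1 ^ 2 + Y2 ^ 2 + Y3 ^ 2 = L ^ 2) by (rewrite <- HY; symmetry; apply pow2_sqrt; nra).
  assert (HYX : Y1 * X1 + Y2 * X2 + Y3 * X3 = L ^ 2 - (Y1 * (Y1 - X1) + Y2 * (Y2 - X2) + Y3 * (Y3 - X3)))
    by (rewrite <- HYY; ring).
  assert (L * sqrt ((Y1 - X1) ^ 2 + (Y2 - X2) ^ 2 + (Y3 - X3) ^ 2) <= L * (116 * L ^ 2))
    by (apply Rmult_le_compat_l; lra).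
  assert (Hscaled : L * (L - 116 * L ^ 2) <= L * D) by (fold D in CS1; nra).
  apply Rmult_le_reg_l in Hscaled; lra.
Qed.

Section Regions.
Variables x y : R.
Hypothesis in_band_xy : in_band x y.

Ltac prepare_region :=
  destruct r123_pos as [H1 [H2 H3]]; destruct PI_r123_bounds as [B1 [B2 B3]];
  pose proof (s2_below_s1 x y in_band_xy); pose proof (s3_below_s2 x y in_band_xy);
  unfold PhiX, PhiY, PhiZ.

Lemma Phi_flat0 : s1 x y <= 0 ->
  PhiX x y = x /\ PhiY x y = y /\ PhiZ x y = 0.
Proof.
  intros Hs. prepare_region.
  rewrite (fold_h_before r1 H1 (s1 x y)), (fold_h_before r2 H2 (s2 x y)), (fold_h_before r3 H3 (s3 x y)),
    (fold_v_before r1 H1 (s1 x y)), (fold_v_before r2 H2 (s2 x y)), (fold_v_before r3 H3 (s3 x y)) by lra.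
  repeat split; ring.
Qed.

Lemma Phi_cyl1 : 0 <= s1 x y <= PI * r1 ->
  PhiX x y = x + 4/5 * (- s1 x y + r1 * sin (s1 x y / r1)) /\
  PhiY x y = y - 3/5 * (- s1 x y + r1 * sin (s1 x y / r1)) /\
  PhiZ x y = r1 * (1 - cos (s1 x y / r1)).
Proof.
  intros Hs. prepare_region.
  rewrite (fold_h_on r1 (s1 x y)), (fold_h_before r2 H2 (s2 x y)), (fold_h_before r3 H3 (s3 x y)),
    (fold_v_on r1 (s1 x y)), (fold_v_before r2 H2 (s2 x y)), (fold_v_before r3 H3 (s3 x y)) by lra.
  repeat split; ring.
Qed.

Lemma Phi_flat1 : PI * r1 <= s1 x y /\ s2 x y <= 0 ->
  PhiX x y = x + 4/5 * (PI * r1 - 2 * s1 x y) /\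
  PhiY x y = y - 3/5 * (PI * r1 - 2 * s1 x y) /\
  PhiZ x y = 2 * r1.
Proof.
  intros [Hs Hs2]. prepare_region.
  rewrite (fold_h_after r1 H1 (s1 x y)), (fold_h_before r2 H2 (s2 x y)), (fold_h_before r3 H3 (s3 x y)),
    (fold_v_after r1 H1 (s1 x y)), (fold_v_before r2 H2 (s2 x y)), (fold_v_before r3 H3 (s3 x y)) by lra.
  repeat split; ring.
Qed.

Lemma Phi_cyl2 : 0 <= s2 x y <= PI * r2 ->
  PhiX x y = x + 4/5 * (PI * r1 - 2 * s1 x y) /\
  PhiY x y = y - 3/5 * (PI * r1 - 2 * s1 x y) + (- s2 x y + r2 * sin (s2 x y / r2)) /\
  PhiZ x y = 2 * r1 - r2 * (1 - cos (s2 x y / r2)).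
Proof.
  intros Hs. prepare_region.
  rewrite (fold_h_after r1 H1 (s1 x y)), (fold_h_on r2 (s2 x y)), (fold_h_before r3 H3 (s3 x y)),
    (fold_v_after r1 H1 (s1 x y)), (fold_v_on r2 (s2 x y)), (fold_v_before r3 H3 (s3 x y)) by lra.
  repeat split; ring.
Qed.

Lemma Phi_flat2 : PI * r2 <= s2 x y /\ s3 x y <= 0 ->
  PhiX x y = x + 4/5 * (PI * r1 - 2 * s1 x y) /\
  PhiY x y = y - 3/5 * (PI * r1 - 2 * s1 x y) + (PI * r2 - 2 * s2 x y) /\
  PhiZ x y = 2 * r1 - 2 * r2.
Proof.
  intros [Hs Hs3]. prepare_region.
  rewrite (fold_h_after r1 H1 (s1 x y)), (fold_h_after r2 H2 (s2 x y)), (fold_h_before r3 H3 (s3 x y)),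
    (fold_v_after r1 H1 (s1 x y)), (fold_v_after r2 H2 (s2 x y)), (fold_v_before r3 H3 (s3 x y)) by lra.
  repeat split; ring.
Qed.

Lemma Phi_cyl3 : 0 <= s3 x y <= PI * r3 ->
  PhiX x y = x + 4/5 * (PI * r1 - 2 * s1 x y) - 4/5 * (- s3 x y + r3 * sin (s3 x y / r3)) /\
  PhiY x y = y - 3/5 * (PI * r1 - 2 * s1 x y) + (PI * r2 - 2 * s2 x y)
             - 3/5 * (- s3 x y + r3 * sin (s3 x y / r3)) /\
  PhiZ x y = 2 * r1 - 2 * r2 + r3 * (1 - cos (s3 x y / r3)).
Proof.
  intros Hs. prepare_region.
  rewrite (fold_h_after r1 H1 (s1 x y)), (fold_h_after r2 H2 (s2 x y)), (fold_h_on r3 (s3 x y)),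
    (fold_v_after r1 H1 (s1 x y)), (fold_v_after r2 H2 (s2 x y)), (fold_v_on r3 (s3 x y)) by lra.
  repeat split; ring.
Qed.

Lemma Phi_flat3 : PI * r3 <= s3 x y ->
  PhiX x y = x - band_length /\ PhiY x y = - y /\ PhiZ x y = 0.
Proof.
  intros Hs. prepare_region.
  rewrite (fold_h_after r1 H1 (s1 x y)), (fold_h_after r2 H2 (s2 x y)), (fold_h_after r3 H3 (s3 x y)),
    (fold_v_after r1 H1 (s1 x y)), (fold_v_after r2 H2 (s2 x y)), (fold_v_after r3 H3 (s3 x y)) by lra.
  unfold s1, s2, s3, r1, r2, r3, band_length. repeat split; field.
Qed.

Lemma band_regions :
  s1 x y <= 0 \/ 0 < s1 x y < PI * r1 \/ (PI * r1 <= s1 x y /\ s2 x y <= 0) \/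
  0 < s2 x y < PI * r2 \/ (PI * r2 <= s2 x y /\ s3 x y <= 0) \/ 0 < s3 x y < PI * r3 \/
  PI * r3 <= s3 x y.
Proof.
  destruct (Rle_dec (s1 x y) 0); [left; auto | right].
  destruct (Rlt_dec (s1 x y) (PI * r1)); [left; lra | right].
  destruct (Rle_dec (s2 x y) 0); [left; lra | right].
  destruct (Rlt_dec (s2 x y) (PI * r2)); [left; lra | right].
  destruct (Rle_dec (s3 x y) 0); [left; lra | right].
  destruct (Rlt_dec (s3 x y) (PI * r3)); [left; lra | right; lra].
Qed.

End Regions.

Lemma cylinder_height_range r s : 0 < r -> 0 < s < PI * r ->
  0 < r * (1 - cos (s / r)) < 2 * r /\ 0 <= sin (s / r).
Proof.
  intros Hr Hs.
  assert (Ht : 0 < s / r < PI).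
  { split; [apply Rdiv_lt_0_compat; lra|].
    apply (Rmult_lt_reg_r r); [lra|]. unfold Rdiv. rewrite Rmult_assoc, Rinv_l; lra. }
  pose proof (cos_open_range _ Ht). split; [nra | apply sin_ge_0; lra].
Qed.

Lemma Phi_cyl1_bounds x y : in_band x y -> 0 < s1 x y < PI * r1 ->
  0 < PhiZ x y < 1/5 /\ PhiY x y <= 2.
Proof.
  intros Hb Hs. destruct r123_pos as [H1 _]. destruct (Phi_cyl1 x y Hb ltac:(lra)) as [_ [EY EZ]].
  destruct (cylinder_height_range r1 (s1 x y) H1 Hs). rewrite EY, EZ.
  unfold in_band in Hb. pose proof PI_4. unfold r1 in *. split; [lra | nra].
Qed.

Lemma Phi_cyl2_bounds x y : in_band x y -> 0 < s2 x y < PI * r2 ->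
  -1/5 < PhiZ x y < 1/5 /\ 5 <= PhiY x y.
Proof.
  intros Hb Hs. destruct r123_pos as [_ [H2 _]]. destruct (Phi_cyl2 x y Hb ltac:(lra)) as [_ [EY EZ]].
  destruct (cylinder_height_range r2 (s2 x y) H2 Hs). rewrite EY, EZ.
  unfold in_band in Hb. pose proof PI_4. unfold s1, s2, r1, r2 in *. split; [lra | nra].
Qed.

Lemma Phi_cyl3_bounds x y : in_band x y -> 0 < s3 x y < PI * r3 ->
  -1/5 < PhiZ x y < 0 /\ PhiY x y <= 2.
Proof.
  intros Hb Hs. destruct r123_pos as [_ [_ H3]]. destruct (Phi_cyl3 x y Hb ltac:(lra)) as [_ [EY EZ]].
  destruct (cylinder_height_range r3 (s3 x y) H3 Hs). rewrite EY, EZ.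
  unfold in_band in Hb. pose proof PI_4. unfold s1, s2, s3, r1, r2, r3 in *. split; [lra | nra].
Qed.

Section Injectivity.
Variables x y x' y' : R.
Hypotheses (Hb : in_band x y) (Hb' : in_band x' y').
Hypotheses (EX : PhiX x y = PhiX x' y') (EY : PhiY x y = PhiY x' y') (EZ : PhiZ x y = PhiZ x' y').

Lemma Phi_cyl1_injective : 0 < s1 x y < PI * r1 -> 0 < s1 x' y' < PI * r1 -> x = x' /\ y = y'.
Proof.
  intros Hs Hs'. destruct r123_pos as [H1 _].
  destruct (Phi_cyl1 x y Hb ltac:(lra)) as [X1 [Y1 Z1]]. destruct (Phi_cyl1 x' y' Hb' ltac:(lra)) as [X2 [Y2 Z2]].
  assert (E : s1 x y = s1 x' y').
  { apply (cos_div_inj r1); try lra. apply (Rmult_eq_reg_l r1); lra. }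
  rewrite X1, X2, E in EX. rewrite Y1, Y2, E in EY. unfold s1 in E. lra.
Qed.

Lemma Phi_cyl2_injective : 0 < s2 x y < PI * r2 -> 0 < s2 x' y' < PI * r2 -> x = x' /\ y = y'.
Proof.
  intros Hs Hs'. destruct r123_pos as [_ [H2 _]].
  destruct (Phi_cyl2 x y Hb ltac:(lra)) as [X1 [Y1 Z1]]. destruct (Phi_cyl2 x' y' Hb' ltac:(lra)) as [X2 [Y2 Z2]].
  assert (E : s2 x y = s2 x' y').
  { apply (cos_div_inj r2); try lra. apply (Rmult_eq_reg_l r2); lra. }
  rewrite X1, X2 in EX. unfold s1, s2 in E, EX. lra.
Qed.

Lemma Phi_cyl3_injective : 0 < s3 x y < PI * r3 -> 0 < s3 x' y' < PI * r3 -> x = x' /\ y = y'.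
Proof.
  intros Hs Hs'. destruct r123_pos as [_ [_ H3]].
  destruct (Phi_cyl3 x y Hb ltac:(lra)) as [X1 [Y1 Z1]]. destruct (Phi_cyl3 x' y' Hb' ltac:(lra)) as [X2 [Y2 Z2]].
  assert (E : s3 x y = s3 x' y').
  { apply (cos_div_inj r3); try lra. apply (Rmult_eq_reg_l r3); lra. }
  rewrite X1, X2, E in EX. unfold s1, s3 in E, EX. lra.
Qed.

(* On the seven pieces of [band_regions] the images are told apart by the
   height and the [y]-coordinate; the two flat end pieces both lie in the
   plane [z = 0] and meet only along the glued edges. *)
Lemma Phi_injective :
  (x = x' /\ y = y') \/ (x = 0 /\ x' = band_length /\ y' = - y) \/
  (x' = 0 /\ x = band_length /\ y = - y').
Proof.
  destruct (band_regions x y) as [R|[R|[R|[R|[R|[R|R]]]]]];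
  destruct (band_regions x' y') as [R'|[R'|[R'|[R'|[R'|[R'|R']]]]]];
  try (left; apply Phi_cyl1_injective; assumption);
  try (left; apply Phi_cyl2_injective; assumption);
  try (left; apply Phi_cyl3_injective; assumption);
  destruct PI_r123_bounds as [B1 [B2 B3]];
  first
   [ pose proof (Phi_flat0 x y Hb R) | pose proof (Phi_cyl1_bounds x y Hb R)
   | pose proof (Phi_flat1 x y Hb R) | pose proof (Phi_cyl2_bounds x y Hb R)
   | pose proof (Phi_flat2 x y Hb R) | pose proof (Phi_cyl3_bounds x y Hb R)
   | pose proof (Phi_flat3 x y Hb R) ];
  first
   [ pose proof (Phi_flat0 x' y' Hb' R') | pose proof (Phi_cyl1_bounds x' y' Hb' R')
   | pose proof (Phi_flat1 x' y' Hb' R') | pose proof (Phi_cyl2_bounds x' y' Hb' R')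
   | pose proof (Phi_flat2 x' y' Hb' R') | pose proof (Phi_cyl3_bounds x' y' Hb' R')
   | pose proof (Phi_flat3 x' y' Hb' R') ];
  unfold in_band in Hb, Hb'; unfold s1, s2, s3, band_length, r1, r2, r3 in *;
  first [ exfalso; lra | left; split; lra | right; left; repeat split; lra
        | right; right; repeat split; lra ].
Qed.

End Injectivity.

(** * Smoothness *)

Definition trig_affine (A B C E G al be ga x y : R) : R :=
  A + B * x + C * y + E * sin (al * x + be * y + ga) + G * cos (al * x + be * y + ga).

Lemma trig_affine_dx A B C E G al be ga x y :
  is_derive (fun t => trig_affine A B C E G al be ga t y) x
    (trig_affine B 0 0 (- (G * al)) (E * al) al be ga x y).
Proof. unfold trig_affine. auto_derive; auto. ring. Qed.

Lemma trig_affine_dy A B C E G al be ga x y :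
  is_derive (fun t => trig_affine A B C E G al be ga x t) y
    (trig_affine C 0 0 (- (G * be)) (E * be) al be ga x y).
Proof. unfold trig_affine. auto_derive; auto. ring. Qed.

Lemma ipderiv_trig_affine al be ga ds : forall A B C E G, exists A' B' C' E' G',
  forall x y, ipderiv ds (trig_affine A B C E G al be ga) x y = trig_affine A' B' C' E' G' al be ga x y.
Proof.
  induction ds as [|d ds IH]; intros A B C E G; [exists A, B, C, E, G; reflexivity|].
  destruct (IH A B C E G) as [A' [B' [C' [E' [G' H]]]]]. destruct d; simpl.
  - exists B', 0, 0, (- (G' * al)), (E' * al). intros x y.
    rewrite (Derive_ext _ (fun t => trig_affine A' B' C' E' G' al be ga t y)) by (intros; apply H).
    apply is_derive_unique, trig_affine_dx.
  - exists C', 0, 0, (- (G' * be)), (E' * be). intros x y.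
    rewrite (Derive_ext _ (fun t => trig_affine A' B' C' E' G' al be ga x t)) by (intros; apply H).
    apply is_derive_unique, trig_affine_dy.
Qed.

Lemma trig_affine_lipschitz A B C E G al be ga x y x' y' :
  Rabs (trig_affine A B C E G al be ga x' y' - trig_affine A B C E G al be ga x y)
  <= (Rabs B + Rabs C + (Rabs E + Rabs G) * (Rabs al + Rabs be)) * (Rabs (x' - x) + Rabs (y' - y)).
Proof.
  unfold trig_affine.
  set (d := Rabs (x' - x) + Rabs (y' - y)). set (S := Rabs al + Rabs be).
  pose proof (Rabs_pos (x' - x)). pose proof (Rabs_pos (y' - y)).
  pose proof (Rabs_pos al). pose proof (Rabs_pos be). pose proof (Rabs_pos E). pose proof (Rabs_pos G).
  pose proof (Rabs_pos B). pose proof (Rabs_pos C).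
  set (u' := al * x' + be * y' + ga). set (u := al * x + be * y + ga).
  assert (Hu : Rabs (u' - u) <= S * d).
  { replace (u' - u) with (al * (x' - x) + be * (y' - y)) by (unfold u, u'; ring).
    eapply Rle_trans; [apply Rabs_triang|]. rewrite !Rabs_mult. unfold S, d. nra. }
  assert (HB : Rabs (B * (x' - x)) <= Rabs B * d) by (rewrite Rabs_mult; unfold d; nra).
  assert (HC : Rabs (C * (y' - y)) <= Rabs C * d) by (rewrite Rabs_mult; unfold d; nra).
  assert (HE : Rabs (E * (sin u' - sin u)) <= Rabs E * (S * d)).
  { rewrite Rabs_mult. apply Rmult_le_compat_l; [lra|]. eapply Rle_trans; [apply sin_lipschitz | exact Hu]. }
  assert (HG : Rabs (G * (cos u' - cos u)) <= Rabs G * (S * d)).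
  { rewrite Rabs_mult. apply Rmult_le_compat_l; [lra|]. eapply Rle_trans; [apply cos_lipschitz | exact Hu]. }
  replace (A + B * x' + C * y' + E * sin u' + G * cos u' - (A + B * x + C * y + E * sin u + G * cos u))
    with (B * (x' - x) + C * (y' - y) + E * (sin u' - sin u) + G * (cos u' - cos u)) by ring.
  pose proof (Rabs_triang (B * (x' - x) + C * (y' - y) + E * (sin u' - sin u)) (G * (cos u' - cos u))).
  pose proof (Rabs_triang (B * (x' - x) + C * (y' - y)) (E * (sin u' - sin u))).
  pose proof (Rabs_triang (B * (x' - x)) (C * (y' - y))).
  lra.
Qed.

Lemma trig_affine_continuous A B C E G al be ga x y : continuous2_at (trig_affine A B C E G al be ga) x y.
Proof.
  intros eps Heps.
  set (K := Rabs B + Rabs C + (Rabs E + Rabs G) * (Rabs al + Rabs be)).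
  assert (HK : 0 <= K).
  { unfold K. pose proof (Rabs_pos B). pose proof (Rabs_pos C). pose proof (Rabs_pos E).
    pose proof (Rabs_pos G). pose proof (Rabs_pos al). pose proof (Rabs_pos be). nra. }
  set (del := eps / (2 * (K + 1))).
  assert (Hdel : 0 < del) by (apply Rdiv_lt_0_compat; lra).
  exists del. split; [exact Hdel|].
  intros x' y' Hx Hy. eapply Rle_lt_trans; [apply trig_affine_lipschitz|]. fold K.
  apply Rle_lt_trans with (K * (2 * del)); [apply Rmult_le_compat_l; lra|].
  replace eps with ((K + 1) * (2 * del)) by (unfold del; field; lra). nra.
Qed.

Definition box (px py e x y : R) : Prop := Rabs (x - px) < e /\ Rabs (y - py) < e.

Lemma ipderiv_local (f g : R -> R -> R) px py e :
  (forall x y, box px py e x y -> f x y = g x y) ->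
  forall ds x y, box px py e x y -> ipderiv ds f x y = ipderiv ds g x y.
Proof.
  intros Hfg ds. induction ds as [|d ds IH]; intros x y [Hx Hy]; simpl; [apply Hfg; split; auto|].
  destruct d; simpl; apply Derive_ext_loc.
  - apply (locally_of_ball _ (e - Rabs (x - px))); [lra|]. intros t Ht. apply IH. split; auto.
    unfold Rabs in *; repeat destruct Rcase_abs; lra.
  - apply (locally_of_ball _ (e - Rabs (y - py))); [lra|]. intros t Ht. apply IH. split; auto.
    unfold Rabs in *; repeat destruct Rcase_abs; lra.
Qed.

Lemma smooth_on_locally_trig_affine (U : R2 -> Prop) (f : R -> R -> R) al be ga :
  (forall x y, U (x, y) -> exists e A B C E G, 0 < e /\
      forall x' y', box x y e x' y' -> f x' y' = trig_affine A B C E G al be ga x' y') ->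
  smooth_on U f.
Proof.
  intros H ds x y HU.
  destruct (H x y HU) as [e [A [B [C [E [G [He Hf]]]]]]].
  destruct (ipderiv_trig_affine al be ga ds A B C E G) as [A' [B' [C' [E' [G' Hip]]]]].
  pose proof (ipderiv_local f _ x y e Hf ds) as Hl.
  assert (Hbox : forall x' y', Rabs (x' - x) < e -> Rabs (y' - y) < e ->
            ipderiv ds f x' y' = trig_affine A' B' C' E' G' al be ga x' y')
    by (intros; rewrite Hl, Hip; [reflexivity | split; auto]).
  assert (Hcentre : Rabs (x - x) < e /\ Rabs (y - y) < e) by (rewrite !Rminus_eq_0, Rabs_R0; lra).
  repeat split.
  - apply (ex_derive_ext_loc (fun t => trig_affine A' B' C' E' G' al be ga t y));
      [|eexists; apply trig_affine_dx].
    apply (locally_of_ball _ e _ He). intros t Ht. symmetry. apply Hbox; tauto.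
  - apply (ex_derive_ext_loc (fun t => trig_affine A' B' C' E' G' al be ga x t));
      [|eexists; apply trig_affine_dy].
    apply (locally_of_ball _ e _ He). intros t Ht. symmetry. apply Hbox; tauto.
  - intros eps Heps. destruct (trig_affine_continuous A' B' C' E' G' al be ga x y eps Heps) as [d [Hd Hdd]].
    exists (Rmin d e). split; [apply Rmin_pos; lra|].
    intros x' y' Hx Hy. pose proof (Rmin_l d e). pose proof (Rmin_r d e).
    rewrite !Hbox by (tauto || lra). apply Hdd; lra.
Qed.

Definition trig_affine_on (D : R2 -> Prop) (al be ga : R) (f : R -> R -> R) : Prop :=
  exists A B C E G, forall x y, D (x, y) -> f x y = trig_affine A B C E G al be ga x y.

Lemma smooth_on_interior_trig_affine (D : R2 -> Prop) al be ga f :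
  trig_affine_on D al be ga f -> smooth_on (interior2 D) f.
Proof.
  intros [A [B [C [E [G HD]]]]]. apply (smooth_on_locally_trig_affine _ _ al be ga).
  intros x y [rad [Hrad Hball]]. exists (rad / 2), A, B, C, E, G. split; [lra|].
  intros x' y' [Hx Hy]. apply HD, Hball.
  eapply Rle_lt_trans; [apply dist2_le_Rabs_sum | simpl; lra].
Qed.

Lemma Phi_smooth_of_trig_affine (D : R2 -> Prop) al be ga :
  trig_affine_on D al be ga PhiX -> trig_affine_on D al be ga PhiY -> trig_affine_on D al be ga PhiZ ->
  smooth_map_on (interior2 D) Phi.
Proof.
  intros HX HY HZ.
  split; [|split]; apply (smooth_on_interior_trig_affine _ al be ga); assumption.
Qed.

Definition fold_region (i : nat) (p : R2) : Prop :=
  match i with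
  | 0%nat => s1 (fst p) (snd p) <= 0
  | 1%nat => 0 <= s1 (fst p) (snd p) <= PI * r1
  | 2%nat => PI * r1 <= s1 (fst p) (snd p) /\ s2 (fst p) (snd p) <= 0
  | 3%nat => 0 <= s2 (fst p) (snd p) <= PI * r2
  | 4%nat => PI * r2 <= s2 (fst p) (snd p) /\ s3 (fst p) (snd p) <= 0
  | 5%nat => 0 <= s3 (fst p) (snd p) <= PI * r3
  | 6%nat => PI * r3 <= s3 (fst p) (snd p)
  | _ => False
  end.

Definition smooth_piece (i : nat) (p : R2) : Prop := open_rect band_length 1 p /\ fold_region i p.

Lemma in_band_of_rect x y : rect band_length 1 (x, y) -> in_band x y.
Proof. unfold rect, in_band. simpl. lra. Qed.

Lemma in_band_of_open_rect x y : open_rect band_length 1 (x, y) -> in_band x y.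
Proof. unfold open_rect, in_band. simpl. lra. Qed.

Lemma fold_region_cover x y : exists i, (i < 7)%nat /\ fold_region i (x, y).
Proof.
  destruct (band_regions x y) as [R|[R|[R|[R|[R|[R|R]]]]]];
    [exists 0%nat | exists 1%nat | exists 2%nat | exists 3%nat | exists 4%nat | exists 5%nat | exists 6%nat];
    (split; [lia | simpl; lra]).
Qed.

Definition convex2 (D : R2 -> Prop) : Prop :=
  forall p q t, D p -> D q -> 0 <= t <= 1 ->
    D ((1 - t) * fst p + t * fst q, (1 - t) * snd p + t * snd q).

Lemma convex_comb_le a b c t : a <= c -> b <= c -> 0 <= t <= 1 -> (1 - t) * a + t * b <= c.
Proof. intros. nra. Qed.

Lemma convex_comb_ge a b c t : c <= a -> c <= b -> 0 <= t <= 1 -> c <= (1 - t) * a + t * b.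
Proof. intros. nra. Qed.

Lemma convex_comb_lt a b c t : a < c -> b < c -> 0 <= t <= 1 -> (1 - t) * a + t * b < c.
Proof. intros. destruct (Rle_dec t (1/2)); nra. Qed.

Lemma convex_comb_gt a b c t : c < a -> c < b -> 0 <= t <= 1 -> c < (1 - t) * a + t * b.
Proof. intros. destruct (Rle_dec t (1/2)); nra. Qed.

Lemma smooth_piece_convex i : (i < 7)%nat -> convex2 (smooth_piece i).
Proof.
  intros Hi [px py] [qx qy] t [Ho Hr] [Ho' Hr'] Ht.
  assert (Hs1 : s1 ((1 - t) * px + t * qx) ((1 - t) * py + t * qy) = (1 - t) * s1 px py + t * s1 qx qy)
    by (unfold s1; ring).
  assert (Hs2 : s2 ((1 - t) * px + t * qx) ((1 - t) * py + t * qy) = (1 - t) * s2 px py + t * s2 qx qy)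
    by (unfold s2; ring).
  assert (Hs3 : s3 ((1 - t) * px + t * qx) ((1 - t) * py + t * qy) = (1 - t) * s3 px py + t * s3 qx qy)
    by (unfold s3; ring).
  unfold smooth_piece, open_rect in *. cbn [fst snd] in *.
  destruct i as [|[|[|[|[|[|[|i]]]]]]]; try lia; cbn [fold_region fst snd] in *;
  rewrite ?Hs1, ?Hs2, ?Hs3;
  repeat match goal with H : _ /\ _ |- _ => destruct H end;
  repeat split;
  first [ apply convex_comb_lt | apply convex_comb_gt | apply convex_comb_le | apply convex_comb_ge ];
  solve [assumption | split; assumption].
Qed.

Lemma dist2_lt_iff p q c : 0 < c -> (fst p - fst q) ^ 2 + (snd p - snd q) ^ 2 < c ^ 2 <-> dist2 p q < c.
Proof.
  intros Hc. unfold dist2. pose proof (sum_sq_nonneg (fst p - fst q) (snd p - snd q)) as Hnn.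
  split; intros H.
  - rewrite <- (sqrt_pow2 c) by lra. apply sqrt_lt_1_alt. lra.
  - apply sqrt_lt_0_alt. rewrite sqrt_pow2 by lra. exact H.
Qed.

Section ConvexClosure.
Variables (D : R2 -> Prop) (p0 : R2) (r0 : R).
Hypotheses (D_convex : convex2 D) (r0_pos : 0 < r0) (ball_in_D : forall z, dist2 z p0 < r0 -> D z).

(* The homothety of ratio [t] centred at [p] maps the ball around [p0] into [D]. *)
Lemma convex_shrunk_ball p t : D p -> 0 < t <= 1 ->
  interior2 D ((1 - t) * fst p + t * fst p0, (1 - t) * snd p + t * snd p0).
Proof.
  intros Hp Ht. set (q := ((1 - t) * fst p + t * fst p0, (1 - t) * snd p + t * snd p0)).
  exists (t * r0). split; [nra|]. intros z Hz.
  set (w := (fst p0 + (fst z - fst q) / t, snd p0 + (snd z - snd q) / t)).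
  assert (Hw : D w).
  { apply ball_in_D, dist2_lt_iff; [lra|]. apply dist2_lt_iff in Hz; [|nra].
    replace ((fst w - fst p0) ^ 2 + (snd w - snd p0) ^ 2)
      with (((fst z - fst q) ^ 2 + (snd z - snd q) ^ 2) / t ^ 2) by (unfold w; simpl; field; lra).
    apply (Rmult_lt_reg_l (t ^ 2)); [nra|].
    replace (t ^ 2 * (((fst z - fst q) ^ 2 + (snd z - snd q) ^ 2) / t ^ 2))
      with ((fst z - fst q) ^ 2 + (snd z - snd q) ^ 2) by (field; lra). nra. }
  replace z with ((1 - t) * fst p + t * fst w, (1 - t) * snd p + t * snd w)
    by (destruct z as [zx zy]; unfold w, q; simpl; f_equal; field; lra).
  apply D_convex; auto; lra.
Qed.

Lemma convex_in_closure_of_interior p : D p -> in_closure_of_interior D p.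
Proof.
  intros Hp eps Heps.
  set (d := dist2 p0 p). assert (Hd : 0 <= d) by apply sqrt_pos.
  set (t := Rmin (1/2) (eps / (2 * (d + 1)))).
  assert (Ht1 : t <= 1/2) by apply Rmin_l.
  assert (Ht2 : t <= eps / (2 * (d + 1))) by apply Rmin_r.
  assert (Ht0 : 0 < t) by (apply Rmin_pos; [lra | apply Rdiv_lt_0_compat; lra]).
  clearbody t.
  exists ((1 - t) * fst p + t * fst p0, (1 - t) * snd p + t * snd p0).
  split; [apply convex_shrunk_ball; auto; lra|].
  apply dist2_lt_iff; [lra|]. cbn [fst snd].
  replace (((1 - t) * fst p + t * fst p0 - fst p) ^ 2 + ((1 - t) * snd p + t * snd p0 - snd p) ^ 2)
    with (t ^ 2 * d ^ 2)
    by (unfold d, dist2; rewrite pow2_sqrt by apply sum_sq_nonneg; ring).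
  assert (t * d < eps).
  { apply Rle_lt_trans with (eps / (2 * (d + 1)) * d); [apply Rmult_le_compat_r; lra|].
    apply (Rmult_lt_reg_r (2 * (d + 1))); [lra|].
    replace (eps / (2 * (d + 1)) * d * (2 * (d + 1))) with (eps * d) by (field; lra). nra. }
  assert (0 <= t * d) by nra. nra.
Qed.

End ConvexClosure.

Lemma smooth_piece_ball i : (i < 7)%nat ->
  exists c rad, 0 < rad /\ forall z, dist2 z c < rad -> smooth_piece i z.
Proof.
  intros Hi.
  destruct i as [|[|[|[|[|[|[|i]]]]]]]; try lia;
  [ exists (1/4, 0), (1/10) | exists (23/16, 0), (1/20) | exists (4, 0), (1/10)
  | exists (36/5, 0), (1/20) | exists (9, 0), (1/10) | exists (203/16, 0), (1/20)
  | exists (14, 0), (1/10) ];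
  (split; [lra|]); intros z Hz;
  pose proof (Rle_lt_trans _ _ _ (Rabs_fst_le_dist2 z _) Hz) as Hx;
  pose proof (Rle_lt_trans _ _ _ (Rabs_snd_le_dist2 z _) Hz) as Hy;
  cbn [fst snd] in Hx, Hy; apply Rabs_def2 in Hx; apply Rabs_def2 in Hy;
  unfold smooth_piece, fold_region, open_rect, band_length, s1, s2, s3, r1, r2, r3;
  pose proof PI_gt_3; pose proof PI_4; repeat split; lra.
Qed.

Lemma phase1 x y : s1 x y / r1 = 8 * x + -6 * y + -10.
Proof. unfold s1, r1. field. Qed.

Lemma phase2 x y : s2 x y / r2 = 24/5 * x + 7/5 * y + (-33 + PI / 5).
Proof. unfold s2, r2. field. Qed.

Lemma phase3 x y : s3 x y / r3 = 8 * x + -6 * y + -100.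
Proof. unfold s3, r3. field. Qed.

Ltac trig_affine_piece region :=
  intros x y [Ho Hr];
  destruct (region x y (in_band_of_open_rect x y Ho) Hr) as [EX [EY EZ]];
  first [rewrite EX | rewrite EY | rewrite EZ];
  unfold trig_affine; rewrite ?phase1, ?phase2, ?phase3;
  unfold s1, s2, s3, r1, r2, r3, band_length; lra.

Lemma Phi_smooth_on_piece i : (i < 7)%nat -> smooth_map_on (interior2 (smooth_piece i)) Phi.
Proof.
  intros Hi. destruct i as [|[|[|[|[|[|[|i]]]]]]]; try lia.
  - apply (Phi_smooth_of_trig_affine _ 0 0 0);
      [exists 0, 1, 0, 0, 0 | exists 0, 0, 1, 0, 0 | exists 0, 0, 0, 0, 0]; trig_affine_piece Phi_flat0.
  - apply (Phi_smooth_of_trig_affine _ 8 (-6) (-10));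
      [exists (4/5), (9/25), (12/25), (2/25), 0 | exists (-3/5), (12/25), (16/25), (-3/50), 0
      | exists (1/10), 0, 0, 0, (-1/10)]; trig_affine_piece Phi_cyl1.
  - apply (Phi_smooth_of_trig_affine _ 0 0 0);
      [exists (8/5 + 2/25 * PI), (-7/25), (24/25), 0, 0 | exists (-6/5 - 3/50 * PI), (24/25), (7/25), 0, 0
      | exists (1/5), 0, 0, 0, 0]; trig_affine_piece Phi_flat1.
  - apply (Phi_smooth_of_trig_affine _ (24/5) (7/5) (-33 + PI / 5));
      [exists (8/5 + 2/25 * PI), (-7/25), (24/25), 0, 0 | exists (27/5 - 1/10 * PI), 0, 0, (1/5), 0
      | exists 0, 0, 0, 0, (1/5)]; trig_affine_piece Phi_cyl2.
  - apply (Phi_smooth_of_trig_affine _ 0 0 0);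
      [exists (8/5 + 2/25 * PI), (-7/25), (24/25), 0, 0 | exists (12 + 3/50 * PI), (-24/25), (-7/25), 0, 0
      | exists (-1/5), 0, 0, 0, 0]; trig_affine_piece Phi_flat2.
  - apply (Phi_smooth_of_trig_affine _ 8 (-6) (-100));
      [exists (-32/5 + 2/25 * PI), (9/25), (12/25), (-2/25), 0
      | exists (6 + 3/50 * PI), (-12/25), (-16/25), (-3/50), 0
      | exists (-1/10), 0, 0, 0, (-1/10)]; trig_affine_piece Phi_cyl3.
  - apply (Phi_smooth_of_trig_affine _ 0 0 0);
      [exists (-72/5), 1, 0, 0, 0 | exists 0, 0, (-1), 0, 0 | exists 0, 0, 0, 0, 0]; trig_affine_piece Phi_flat3.
Qed.

Lemma Phi_piecewise_smooth : piecewise_smooth_on (open_rect band_length 1) Phi.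
Proof.
  exists (map smooth_piece (seq 0 7)). split.
  - intros [x y] Hp. destruct (fold_region_cover x y) as [i [Hi Hr]].
    exists (smooth_piece i). split; [apply in_map, in_seq; lia | split; assumption].
  - intros D HD. apply in_map_iff in HD as [i [<- Hi]]. apply in_seq in Hi.
    destruct (smooth_piece_ball i ltac:(lia)) as [c [rad [Hrad Hball]]].
    split; [intros p [Ho _]; exact Ho|]. split.
    + intros p Hp. apply (convex_in_closure_of_interior _ c rad); auto. apply smooth_piece_convex. lia.
    + apply Phi_smooth_on_piece. lia.
Qed.

(** * Planar and cylindrical pieces *)

Definition band_piece (i : nat) (p : R2) : Prop :=
  rect band_length 1 p /\
  match i with
  | 0%nat => fold_region 0 p \/ fold_region 6 p
  | 1%nat => fold_region 2 p
  | 2%nat => fold_region 4 p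
  | 3%nat => fold_region 1 p
  | 4%nat => fold_region 3 p
  | 5%nat => fold_region 5 p
  | _ => False
  end.

Definition plane_normal (i : nat) : R3 := ((0, 0), 1).
Definition plane_height (i : nat) : R := match i with 0%nat => 0 | 1%nat => 2 * r1 | _ => 2 * r1 - 2 * r2 end.

(* The axis of each cylinder is the image of its fold line, moved vertically
   by the radius. *)
Definition cyl_point (i : nat) : R3 :=
  match i with
  | 0%nat => ((4/5, -3/5), r1)
  | 1%nat => ((0, 27/5 - PI/10), 2 * r1 - r2)
  | _ => ((-4/5 * (38/25 - PI/10), -3/5 * (38/25 - PI/10)), 2 * r1 - 2 * r2 + r3)
  end.
Definition cyl_dir (i : nat) : R3 :=
  match i with 0%nat => ((3/5, 4/5), 0) | 1%nat => ((1, 0), 0) | _ => ((3/5, -4/5), 0) end.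
Definition cyl_radius (i : nat) : R := match i with 0%nat => r1 | 1%nat => r2 | _ => r3 end.

Lemma band_piece_cover p : rect band_length 1 p -> exists i, (i < 6)%nat /\ band_piece i p.
Proof.
  intros Hp. destruct p as [x y]. destruct (fold_region_cover x y) as [i [Hi Hr]].
  destruct i as [|[|[|[|[|[|[|i]]]]]]]; try lia;
    [exists 0%nat | exists 3%nat | exists 1%nat | exists 4%nat | exists 2%nat | exists 5%nat | exists 0%nat];
    (split; [lia | split; simpl; auto]).
Qed.

Lemma nonempty_interior_of_smooth_piece i j : (i < 7)%nat ->
  (forall p, smooth_piece i p -> band_piece j p) -> nonempty_interior (band_piece j).
Proof.
  intros Hi Hsub. destruct (smooth_piece_ball i Hi) as [c [rad [Hrad Hball]]].
  exists c, rad. split; [exact Hrad|]. intros q Hq. apply Hsub, Hball, Hq.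
Qed.

Lemma band_piece_nonempty_interior i : (i < 6)%nat -> nonempty_interior (band_piece i).
Proof.
  intros Hi.
  assert (Hsub : forall k p, smooth_piece k p -> rect band_length 1 p /\ fold_region k p)
    by (intros k p [Ho Hr]; split; [unfold open_rect, rect in *; lra | exact Hr]).
  destruct i as [|[|[|[|[|[|i]]]]]]; try lia;
  [ apply (nonempty_interior_of_smooth_piece 0) | apply (nonempty_interior_of_smooth_piece 2)
  | apply (nonempty_interior_of_smooth_piece 4) | apply (nonempty_interior_of_smooth_piece 1)
  | apply (nonempty_interior_of_smooth_piece 3) | apply (nonempty_interior_of_smooth_piece 5) ];
  try lia; intros p Hp; destruct (Hsub _ _ Hp); split; simpl; auto.
Qed.

Lemma interior2_inter (D1 D2 : R2 -> Prop) p :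
  interior2 D1 p -> interior2 D2 p -> interior2 (fun q => D1 q /\ D2 q) p.
Proof.
  intros [e1 [He1 H1]] [e2 [He2 H2]]. exists (Rmin e1 e2). split; [apply Rmin_pos; auto|].
  intros q Hq. pose proof (Rmin_l e1 e2). pose proof (Rmin_r e1 e2). split; [apply H1 | apply H2]; lra.
Qed.

Lemma interior2_not_in_line (D : R2 -> Prop) p a b c : 0 < a ^ 2 + b ^ 2 -> interior2 D p ->
  ~ (forall q, D q -> a * fst q + b * snd q = c).
Proof.
  intros Hab [rad [Hrad Hball]] Hline.
  pose proof (Rabs_pos a). pose proof (Rabs_pos b).
  set (t := rad / (2 * (Rabs a + Rabs b + 1))).
  assert (Ht : 0 < t) by (apply Rdiv_lt_0_compat; lra).
  assert (Hp : D p) by (apply Hball; rewrite dist2_refl; lra).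
  assert (Hq : D (fst p + t * a, snd p + t * b)).
  { apply Hball. eapply Rle_lt_trans; [apply dist2_le_Rabs_sum|]. simpl.
    replace (fst p + t * a - fst p) with (t * a) by ring. replace (snd p + t * b - snd p) with (t * b) by ring.
    rewrite !Rabs_mult, (Rabs_right t) by lra.
    apply Rle_lt_trans with (t * (Rabs a + Rabs b + 1)); [nra|].
    unfold t. replace (rad / (2 * (Rabs a + Rabs b + 1)) * (Rabs a + Rabs b + 1)) with (rad / 2) by (field; lra).
    lra. }
  pose proof (Hline _ Hp). pose proof (Hline _ Hq). simpl in *. nra.
Qed.

Ltac separating_line_tac :=
  solve [lra | intros [x y] [Hr Ri] [_ Rj]; pose proof (s2_below_s1 x y (in_band_of_rect x y Hr));
    pose proof (s3_below_s2 x y (in_band_of_rect x y Hr)); cbn [fold_region fst snd] in *;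
    unfold s1, s2, s3 in *; repeat match goal with H : _ \/ _ |- _ => destruct H end; lra].

(* Two different pieces meet inside the band at most along one of the six
   lines bounding the fold regions. *)
Lemma band_piece_interiors_disjoint i j : (i < j < 6)%nat ->
  forall p, interior2 (band_piece i) p -> interior2 (band_piece j) p -> False.
Proof.
  intros Hij p Hi Hj. pose proof (interior2_inter _ _ _ Hi Hj) as H.
  pose proof PI_r123_bounds as [B1 [B2 B3]].
  assert (Hpos : forall a b, a <> 0 -> 0 < a ^ 2 + b ^ 2) by (intros; pose proof (pow2_ge_0 b); nra).
  assert (Hline : forall a b c, a <> 0 ->
            (forall q, band_piece i q -> band_piece j q -> a * fst q + b * snd q = c) -> False)
    by (intros a b c Ha Hl; apply (interior2_not_in_line _ p a b c (Hpos a b Ha) H); intros q []; auto).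
  clear Hi Hj H.
  destruct i as [|[|[|[|[|[|i]]]]]]; destruct j as [|[|[|[|[|[|j]]]]]]; try lia;
  first
    [ apply (Hline (4/5) (-3/5) 1); separating_line_tac
    | apply (Hline (4/5) (-3/5) (1 + PI * r1)); separating_line_tac
    | apply (Hline (24/25) (7/25) (33/5 - PI/25)); separating_line_tac
    | apply (Hline (24/25) (7/25) (33/5 - PI/25 + PI * r2)); separating_line_tac
    | apply (Hline (4/5) (-3/5) 10); separating_line_tac
    | apply (Hline (4/5) (-3/5) (10 + PI * r3)); separating_line_tac ].
Qed.

Lemma Phi_planar_pieces i : (i < 3)%nat ->
  plane_normal i <> zero3 /\ (forall p, band_piece i p -> plane (plane_normal i) (plane_height i) (Phi p)).
Proof.
  intros Hi. split; [unfold plane_normal, zero3; intros E; inversion E; lra|].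
  intros [x y] [Hr Hp]. pose proof (in_band_of_rect x y Hr) as Hb.
  cbv [plane dot3 plane_normal Defs.c1 c2 c3 Phi fst snd].
  destruct i as [|[|[|i]]]; try lia; cbn [fold_region fst snd plane_height] in Hp |- *.
  - destruct Hp as [Hp|Hp]; [destruct (Phi_flat0 x y Hb Hp) as [_ [_ Z]] | destruct (Phi_flat3 x y Hb Hp) as [_ [_ Z]]];
      rewrite Z; ring.
  - destruct (Phi_flat1 x y Hb Hp) as [_ [_ Z]]. rewrite Z. ring.
  - destruct (Phi_flat2 x y Hb Hp) as [_ [_ Z]]. rewrite Z. ring.
Qed.

Lemma Phi_cylindrical_pieces i : (i < 3)%nat ->
  cyl_dir i <> zero3 /\ 0 < cyl_radius i /\
  (forall p, band_piece (3 + i) p -> cylinder (cyl_point i) (cyl_dir i) (cyl_radius i) (Phi p)).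
Proof.
  intros Hi. destruct r123_pos as [H1 [H2 H3]].
  destruct i as [|[|[|i]]]; try lia;
    (split; [unfold cyl_dir, zero3; intros E; inversion E; lra | split; [simpl; lra|]]);
    intros [x y] [Hr Hp]; pose proof (in_band_of_rect x y Hr) as Hb; cbn [fold_region fst snd] in Hp;
    cbv [cylinder dot3 sub3 cyl_point cyl_dir cyl_radius Defs.c1 c2 c3 Phi fst snd].
  - destruct (Phi_cyl1 x y Hb Hp) as [X [Y Z]]. rewrite X, Y, Z.
    pose proof (sin2_cos2_pow (s1 x y / r1)) as SC.
    set (S := sin (s1 x y / r1)) in *. set (C := cos (s1 x y / r1)) in *. clearbody S C.
    unfold s1, r1. transitivity ((1/10) ^ 2 * (S ^ 2 + C ^ 2)); [field | rewrite SC; ring].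
  - destruct (Phi_cyl2 x y Hb Hp) as [X [Y Z]]. rewrite X, Y, Z.
    pose proof (sin2_cos2_pow (s2 x y / r2)) as SC.
    set (S := sin (s2 x y / r2)) in *. set (C := cos (s2 x y / r2)) in *. clearbody S C.
    unfold s1, s2, r1, r2. transitivity ((1/5) ^ 2 * (S ^ 2 + C ^ 2)); [field | rewrite SC; ring].
  - destruct (Phi_cyl3 x y Hb Hp) as [X [Y Z]]. rewrite X, Y, Z.
    pose proof (sin2_cos2_pow (s3 x y / r3)) as SC.
    set (S := sin (s3 x y / r3)) in *. set (C := cos (s3 x y / r3)) in *. clearbody S C.
    unfold s1, s2, s3, r1, r2, r3. transitivity ((1/10) ^ 2 * (S ^ 2 + C ^ 2)); [field | rewrite SC; ring].
Qed.

Lemma planes_distinct i j : (i < j < 3)%nat ->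
  ~ same_set (plane (plane_normal i) (plane_height i)) (plane (plane_normal j) (plane_height j)).
Proof.
  intros Hij Hs. specialize (Hs ((0, 0), plane_height i)).
  cbv [plane dot3 plane_normal Defs.c1 c2 c3 fst snd] in Hs.
  assert (H : 0 * 0 + 0 * 0 + 1 * plane_height i = plane_height i) by ring. apply Hs in H.
  destruct i as [|[|[|i]]]; destruct j as [|[|[|j]]]; try lia; simpl in H; unfold r1, r2 in H; lra.
Qed.

(* The point of the axis shifted vertically by the radius lies on the first
   cylinder but not on the second. *)
Lemma cylinders_distinct i j : (i < j < 3)%nat ->
  ~ same_set (cylinder (cyl_point i) (cyl_dir i) (cyl_radius i))
             (cylinder (cyl_point j) (cyl_dir j) (cyl_radius j)).
Proof.
  intros Hij Hs.
  set (P := ((Defs.c1 (cyl_point i), c2 (cyl_point i)), c3 (cyl_point i) + cyl_radius i)).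
  assert (Hi : cylinder (cyl_point i) (cyl_dir i) (cyl_radius i) P).
  { unfold P. destruct i as [|[|[|i]]]; try lia;
      cbv [cylinder dot3 sub3 cyl_point cyl_dir cyl_radius Defs.c1 c2 c3 fst snd]; field. }
  apply Hs in Hi. unfold P in Hi. clear P Hs. pose proof PI_gt_3. pose proof PI_4.
  destruct i as [|[|[|i]]]; destruct j as [|[|[|j]]]; try lia;
    cbv [cylinder dot3 sub3 cyl_point cyl_dir cyl_radius Defs.c1 c2 c3 fst snd] in Hi; unfold r1, r2, r3 in Hi.
  - assert (E : (PI / 10 - 6) ^ 2 + 1/25 = (1/5) ^ 2) by (rewrite <- Hi; field). nra.
  - set (K := 38/25 - PI/10) in *. assert (1 < K) by (unfold K; lra).
    assert (E : 16/25 * (1 + K) ^ 2 + 9/25 * (K - 1) ^ 2 + 9/100 - (24/25) ^ 2 = (1/10) ^ 2)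
      by (rewrite <- Hi; field). nra.
  - set (K := 38/25 - PI/10) in *. set (M := 27/5 - PI/10) in *.
    assert (1 < K) by (unfold K; lra). assert (4 < M) by (unfold M; lra).
    assert (E : (K + 3/5 * M) ^ 2 + 9/100 = (1/10) ^ 2) by (rewrite <- Hi; field). nra.
Qed.

Lemma Phi_mobius_compatible : mobius_compatible band_length 1 Phi.
Proof.
  intros t Ht.
  assert (H0 : in_band 0 t) by (unfold in_band, band_length; lra).
  assert (HL : in_band band_length (- t)) by (unfold in_band, band_length; lra).
  destruct (Phi_flat0 0 t H0) as [X0 [Y0 Z0]]; [unfold s1; lra|].
  destruct (Phi_flat3 band_length (- t) HL) as [X1 [Y1 Z1]];
    [unfold s3, band_length, r3; pose proof PI_4; lra|].
  unfold Phi. cbn [fst snd]. rewrite X0, Y0, Z0, X1, Y1, Z1. f_equal. f_equal; ring.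
Qed.

Lemma Phi_continuous : continuous_on_set (rect band_length 1) Phi.
Proof.
  intros [px py] Hp eps Heps. exists eps. split; [exact Heps|]. intros [qx qy] Hq Hd.
  eapply Rle_lt_trans; [|exact Hd].
  apply Phi_chord_le; apply in_band_of_rect; assumption.
Qed.

Lemma Phi_mobius_injective : mobius_injective band_length 1 Phi.
Proof.
  intros [x y] [x' y'] Hp Hq E. unfold Phi in E. cbn [fst snd] in E. injection E as EX EY EZ.
  destruct (Phi_injective x y x' y' (in_band_of_rect x y Hp) (in_band_of_rect x' y' Hq) EX EY EZ)
    as [[-> ->]|[[? [? ?]]|[? [? ?]]]]; [left; reflexivity | right; left | right; right]; simpl; auto.
Qed.

Lemma Phi_length_preserving : length_preserving_on (open_rect band_length 1) Phi.
Proof.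
  apply (length_preserving_of_chord_bounds _ _ 116); [lra| |];
    intros [px py] [qx qy] Hp Hq.
  - apply Phi_chord_le; apply in_band_of_open_rect; assumption.
  - apply Phi_chord_ge. apply in_band_of_open_rect; assumption.
Qed.

Lemma Phi_three_planes_three_cylinders : three_planes_three_cylinders band_length 1 Phi.
Proof.
  exists band_piece, plane_normal, plane_height, cyl_point, cyl_dir, cyl_radius.
  split; [|split; [|split; [|split; [|split; [|split]]]]].
  - exact band_piece_cover.
  - intros i Hi. split; [intros p [Hp _]; exact Hp | exact (band_piece_nonempty_interior i Hi)].
  - exact band_piece_interiors_disjoint.
  - exact Phi_planar_pieces.
  - exact Phi_cylindrical_pieces.
  - exact planes_distinct.
  - exact cylinders_distinct.
Qed.

Theorem mainTheorem1 :
  exists (l b : R) (Phi : R2 -> R3),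
    0 < l /\ 0 < b /\
    mobius_compatible l b Phi /\
    continuous_on_set (rect l b) Phi /\
    mobius_injective l b Phi /\
    piecewise_smooth_on (open_rect l b) Phi /\
    length_preserving_on (open_rect l b) Phi /\
    three_planes_three_cylinders l b Phi.
Proof.
  exists band_length, 1, Phi.
  split; [unfold band_length; lra|]. split; [lra|].
  split; [exact Phi_mobius_compatible|].
  split; [exact Phi_continuous|].
  split; [exact Phi_mobius_injective|].
  split; [exact Phi_piecewise_smooth|].
  split; [exact Phi_length_preserving|].
  exact Phi_three_planes_three_cylinders.
Qed.
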